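(* Let $w,v\in\mathbb{C}$ and put $\tilde p(z)=w(1-e^z)+z$. As real $n\to\infty$, \begin{align*} S_n(w;v)&=(n+v)\int_{-2}^{0}e^{n\tilde p(z)}e^{vz}\,dz+O\!\left(e^{-n/2}\right)\qquad(\mathrm{Re}(w)\leq1),\\ T_n(w;v)&=(n+v)\int_{0}^{2}e^{n\tilde p(z)}e^{vz}\,dz+O\!\left(e^{-n/2}\right)\qquad(\mathrm{Re}(w)\geq1), \end{align*} with implied constants depending only on $w$ and $v$.
   Context: Principal logarithm branch (arguments in $(-\pi,\pi]$); $(nw)^{-(n+v)}=e^{-(n+v)\log n}e^{-(n+v)\log w}$, $z^{n+v}=e^{(n+v)\log z}$ for $z>0$. For real $n>0$ with $\mathrm{Re}(n+v)>-1$: $S_n(w;v)=1+nw\int_0^1 e^{nw(1-z)}z^{n+v}\,dz$ and, for $w\neq0$, $T_n(w;v)=e^{nw}(nw)^{-(n+v)}\Gamma(n+v+1)-S_n(w;v)$. *)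

From Stdlib Require Import Reals.
From Coquelicot Require Export Coquelicot.
Open Scope R_scope.
Open Scope C_scope.

Definition cexp (z : C) : C :=
  (exp (Re z) * cos (Im z), exp (Re z) * sin (Im z))%R.

(* principal argument, values in (-PI, PI]; arg 0 := 0 *)
Definition Carg (z : C) : R :=
  let x := Re z in let y := Im z in
  if Rlt_dec 0 x then atan (y / x)
  else if Rlt_dec x 0 then
         (if Rle_dec 0 y then atan (y / x) + PI else atan (y / x) - PI)
  else if Rlt_dec 0 y then PI / 2
  else if Rlt_dec y 0 then - (PI / 2)
  else 0.

Definition Clog (z : C) : C := (ln (Cmod z), Carg z).

(* z^s for real z > 0 (set to 0 at z <= 0, a null set for the integrals) *)
Definition rpowC (z : R) (s : C) : C :=
  if Rlt_dec 0 z then cexp (s * RtoC (ln z)) else 0.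

Definition CGamma (s : C) : C :=
  RInt_gen (V := C_R_CompleteNormedModule)
    (fun t => rpowC t (s - 1) * RtoC (exp (- t)))
    (at_right 0) (Rbar_locally p_infty).

Definition CInt (f : R -> C) (a b : R) : C :=
  RInt (V := C_R_CompleteNormedModule) f a b.

Definition S_n (n : R) (w v : C) : C :=
  1 + RtoC n * w *
      CInt (fun z => cexp (RtoC n * w * RtoC (1 - z)) * rpowC z (RtoC n + v)) 0 1.

(* T_n(w;v) = e^{nw} (nw)^{-(n+v)} Gamma(n+v+1) - S_n(w;v),
   with (nw)^{-(n+v)} = e^{-(n+v) log n} e^{-(n+v) log w} *)
Definition T_n (n : R) (w v : C) : C :=
  cexp (RtoC n * w)
  * cexp (- (RtoC n + v) * RtoC (ln n)) * cexp (- (RtoC n + v) * Clog w)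
  * CGamma (RtoC n + v + 1) - S_n n w v.

Definition ptilde (w : C) (z : R) : C := w * (1 - RtoC (exp z)) + RtoC z.

Definition integrand (n : R) (w v : C) (z : R) : C :=
  cexp (RtoC n * ptilde w z) * cexp (v * RtoC z).

(* Let u(t) = n p~(t) + v t, so that the integrand is e^u and u'(t) = (n+v) - n w e^t.
   Integrating u' e^u over [α, β] and substituting z = e^t in the second half gives
     (n+v) ∫_α^β e^u = e^{u(β)} - e^{u(α)} + n w ∫_{e^α}^{e^β} e^{nw(1-z)} z^{n+v} dz.
   On [-2, 0] this leaves S_n - (main term) = n w ∫_0^{e^-2} (...) + e^{u(-2)}, both O(n e^{-n})
   when Re w <= 1.  On [0, 2] it leaves T_n - (main term) = n w ∫_{e^2}^∞ (...) - e^{u(2)}, both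
   O(e^{-n/2}) when Re w >= 1, once one knows the Laplace transform
     n w ∫_0^∞ e^{nw(1-z)} z^{n+v} dz = e^{nw} (nw)^{-(n+v)} Γ(n+v+1).
   That identity comes from rotating the ray of the Gamma integral by arg w ∈ (-π/2, π/2): the
   derivative in the angle of the integral over [ε, L] is a pure boundary term, which vanishes
   as ε -> 0 and L -> ∞. *)

From Stdlib Require Import Reals Lra.
From Coquelicot Require Import Coquelicot.
Open Scope R_scope.
Open Scope C_scope.

(** * Calculus of complex-valued functions of a real variable *)

Notation is_derive_C f x l := (@is_derive R_AbsRing C_R_NormedModule f x (l : C)).
Notation continuous_C f x := (@continuous R_UniformSpace C_R_NormedModule f x).
Notation ex_CInt f a b := (@ex_RInt C_R_CompleteNormedModule f a b).
Notation is_CInt f a b l := (@is_RInt C_R_NormedModule f a b l).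

Lemma is_derive_eq {K : AbsRing} {V : NormedModule K} (f : K -> V) x l l' :
  is_derive f x l -> l = l' -> is_derive f x l'.
Proof. intros H ->; exact H. Qed.

Lemma is_derive_C_eq (f : R -> C) x (l l' : C) : is_derive_C f x l -> l = l' -> is_derive_C f x l'.
Proof. intros H ->; exact H. Qed.

Lemma is_derive_continuity_pt (f : R -> R) x l : is_derive f x l -> continuity_pt f x.
Proof.
  intros H. apply continuity_pt_filterlim.
  apply (ex_derive_continuous (K:=R_AbsRing) (V:=R_NormedModule)). exists l; exact H.
Qed.

Lemma is_derive_Rplus (f g : R -> R) x df dg : is_derive f x df -> is_derive g x dg ->
  is_derive (fun t => f t + g t)%R x (df + dg)%R.
Proof. exact (is_derive_plus f g x df dg). Qed.

Lemma is_derive_Rminus (f g : R -> R) x df dg : is_derive f x df -> is_derive g x dg ->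
  is_derive (fun t => f t - g t)%R x (df - dg)%R.
Proof. exact (is_derive_minus f g x df dg). Qed.

Lemma is_derive_C_components (f : R -> C) x l :
  is_derive (fun t => fst (f t)) x (fst l) ->
  is_derive (fun t => snd (f t)) x (snd l) -> is_derive_C f x l.
Proof.
  intros H1 H2.
  eapply filterdiff_ext_lin.
  - eapply filterdiff_ext.
    2: { apply (filterdiff_comp_2 (fun t => fst (f t)) (fun t => snd (f t)) (fun a b => (a,b)) _ _ (fun a b => (a,b)) H1 H2).
         apply filterdiff_linear.
         apply (is_linear_prod (fun t : prod_NormedModule R_AbsRing R_NormedModule R_NormedModule => fst t)
                               (fun t : prod_NormedModule R_AbsRing R_NormedModule R_NormedModule => snd t));
           [apply is_linear_fst | apply is_linear_snd]. }
    intros y. simpl. destruct (f y); reflexivity.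
  - intros y. simpl. destruct l. reflexivity.
Qed.

Lemma is_derive_C_fst (f : R -> C) x l : is_derive_C f x l -> is_derive (fun t => fst (f t)) x (fst l).
Proof.
  intros H. eapply filterdiff_ext_lin.
  - apply (filterdiff_comp' f (fun t : C_R_NormedModule => fst t) x _ (fun t : C_R_NormedModule => fst t) H).
    apply filterdiff_linear. apply (is_linear_fst (U:=R_NormedModule) (V:=R_NormedModule)).
  - intros y. reflexivity.
Qed.

Lemma is_derive_C_snd (f : R -> C) x l : is_derive_C f x l -> is_derive (fun t => snd (f t)) x (snd l).
Proof.
  intros H. eapply filterdiff_ext_lin.
  - apply (filterdiff_comp' f (fun t : C_R_NormedModule => snd t) x _ (fun t : C_R_NormedModule => snd t) H).
    apply filterdiff_linear. apply (is_linear_snd (U:=R_NormedModule) (V:=R_NormedModule)).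
  - intros y. reflexivity.
Qed.

Lemma is_derive_C_continuous (f : R -> C) x l : is_derive_C f x l -> continuous_C f x.
Proof. intros H. apply (ex_derive_continuous (K:=R_AbsRing) (V:=C_R_NormedModule)). exists l. exact H. Qed.

Lemma is_derive_C_RtoC (f : R -> R) x l : is_derive f x l -> is_derive_C (fun t => RtoC (f t)) x (RtoC l).
Proof. intros H. apply is_derive_C_components; simpl. exact H. apply (is_derive_const (K:=R_AbsRing) (V:=R_NormedModule)). Qed.

Lemma is_derive_C_const (c : C) x : is_derive_C (fun _ => c) x 0.
Proof. apply is_derive_C_components; simpl; apply (is_derive_const (K:=R_AbsRing) (V:=R_NormedModule)). Qed.

Lemma is_derive_C_id x : is_derive_C (fun t => RtoC t) x 1.
Proof. apply is_derive_C_RtoC, (is_derive_id (K:=R_AbsRing)). Qed.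

Lemma is_derive_C_plus (f g : R -> C) x df dg : is_derive_C f x df -> is_derive_C g x dg ->
  is_derive_C (fun t => f t + g t) x (df + dg).
Proof. exact (is_derive_plus (K:=R_AbsRing) (V:=C_R_NormedModule) f g x df dg). Qed.

Lemma is_derive_C_minus (f g : R -> C) x df dg : is_derive_C f x df -> is_derive_C g x dg ->
  is_derive_C (fun t => f t - g t) x (df - dg).
Proof. exact (is_derive_minus (K:=R_AbsRing) (V:=C_R_NormedModule) f g x df dg). Qed.

Lemma is_derive_C_mult (f g : R -> C) x df dg : is_derive_C f x df -> is_derive_C g x dg ->
  is_derive_C (fun t => f t * g t) x (df * g x + f x * dg).
Proof.
  intros Hf Hg.
  pose proof (is_derive_C_fst _ _ _ Hf); pose proof (is_derive_C_snd _ _ _ Hf).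
  pose proof (is_derive_C_fst _ _ _ Hg); pose proof (is_derive_C_snd _ _ _ Hg).
  apply is_derive_C_components; simpl.
  - eapply is_derive_eq.
    + apply is_derive_Rminus; apply Derive.is_derive_mult; eassumption.
    + destruct df, dg, (f x), (g x); simpl; ring.
  - eapply is_derive_eq.
    + apply is_derive_Rplus; apply Derive.is_derive_mult; eassumption.
    + destruct df, dg, (f x), (g x); simpl; ring.
Qed.

Lemma is_derive_C_scal (c : C) (f : R -> C) x df : is_derive_C f x df ->
  is_derive_C (fun t => c * f t) x (c * df).
Proof.
  intros H. eapply is_derive_eq.
  - apply is_derive_C_mult. apply is_derive_C_const. exact H.
  - destruct c, df, (f x); apply injective_projections; simpl; ring.
Qed.

Lemma is_derive_C_cexp (f : R -> C) x df : is_derive_C f x df ->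
  is_derive_C (fun t => cexp (f t)) x (df * cexp (f x)).
Proof.
  intros Hf.
  pose proof (is_derive_comp exp _ x _ _ (is_derive_exp _) (is_derive_C_fst _ _ _ Hf)) as Hre.
  pose proof (is_derive_comp cos _ x _ _ (is_derive_cos _) (is_derive_C_snd _ _ _ Hf)) as Hcos.
  pose proof (is_derive_comp sin _ x _ _ (is_derive_sin _) (is_derive_C_snd _ _ _ Hf)) as Hsin.
  unfold cexp. apply is_derive_C_components; simpl.
  - eapply is_derive_eq. apply (Derive.is_derive_mult _ _ _ _ _ Hre Hcos).
    destruct df, (f x); simpl; change scal with Rmult; simpl; ring.
  - eapply is_derive_eq. apply (Derive.is_derive_mult _ _ _ _ _ Hre Hsin).
    destruct df, (f x); simpl; change scal with Rmult; simpl; ring.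
Qed.

Lemma scal_C (r : R) (z : C_R_NormedModule) : scal r z = RtoC r * z.
Proof. destruct z as [a b]. apply injective_projections; simpl; change (scal r ?x) with (r * x)%R; ring. Qed.

Lemma norm_C (z : C) : @norm R_AbsRing C_R_NormedModule z = Cmod z.
Proof.
  destruct z as [x y]. unfold Cmod, norm. simpl. unfold prod_norm, norm; simpl. unfold abs; simpl.
  f_equal. rewrite !Rmult_1_r, <- !Rabs_mult, !Rabs_right; try nra; ring.
Qed.

Lemma Rabs_fst_le_Cmod (z : C) : Rabs (fst z) <= Cmod z.
Proof. pose proof (Rmax_Cmod z). pose proof (Rmax_l (Rabs (fst z)) (Rabs (snd z))). lra. Qed.

Lemma Rabs_snd_le_Cmod (z : C) : Rabs (snd z) <= Cmod z.
Proof. pose proof (Rmax_Cmod z). pose proof (Rmax_r (Rabs (fst z)) (Rabs (snd z))). lra. Qed.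

Lemma Cmod_le_Rabs_fst_snd (z : C) : Cmod z <= Rabs (fst z) + Rabs (snd z).
Proof.
  destruct z as [x y]. unfold Cmod; simpl.
  pose proof (Rabs_pos x); pose proof (Rabs_pos y).
  apply Rsqr_incr_0_var; [| lra].
  rewrite Rsqr_sqrt by nra. unfold Rsqr.
  pose proof (Rsqr_abs x); pose proof (Rsqr_abs y). unfold Rsqr in *. nra.
Qed.

Lemma ball_C_of_Cmod_lt (z w : C) (eps : R) : Cmod (w - z) < eps -> @ball C_R_NormedModule z eps w.
Proof.
  intros H. split.
  - change (Rabs (fst w - fst z) < eps). eapply Rle_lt_trans; [| exact H].
    replace (fst w - fst z)%R with (fst (w - z)) by (simpl; ring). apply Rabs_fst_le_Cmod.
  - change (Rabs (snd w - snd z) < eps). eapply Rle_lt_trans; [| exact H].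
    replace (snd w - snd z)%R with (snd (w - z)) by (simpl; ring). apply Rabs_snd_le_Cmod.
Qed.

Lemma Cmod_le_of_ball_C (z y : C) (e : R) : @ball C_R_NormedModule z e y -> Cmod (z - y) <= 2 * e.
Proof.
  intros [H1 H2]. change (Rabs (fst y - fst z) < e) in H1. change (Rabs (snd y - snd z) < e) in H2.
  eapply Rle_trans. apply Cmod_le_Rabs_fst_snd. simpl.
  rewrite <- (Rabs_Ropp (fst z + - fst y)), <- (Rabs_Ropp (snd z + - snd y)).
  replace (- (fst z + - fst y))%R with (fst y - fst z)%R by ring.
  replace (- (snd z + - snd y))%R with (snd y - snd z)%R by ring. lra.
Qed.

Lemma continuous_C_at_0_of_linear_bound (f : R -> C) (K : R) :
  f 0%R = 0 -> (forall y, 0 < Rabs y < 1 -> Cmod (f y) <= K * Rabs y) -> continuous_C f 0%R.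
Proof.
  intros H0 Hb. apply (proj2 (filterlim_locally (U:=C_R_NormedModule) f (f 0%R))). intros eps.
  assert (Hd : 0 < Rmin 1 (eps / (Rabs K + 1))).
  { apply Rmin_pos. lra. apply Rdiv_lt_0_compat. apply cond_pos. pose proof (Rabs_pos K); lra. }
  exists (mkposreal _ Hd). intros y Hy. apply ball_C_of_Cmod_lt.
  change (Rabs (y - 0) < Rmin 1 (eps / (Rabs K + 1))) in Hy.
  rewrite H0, Rminus_0_r in *.
  replace (f y - 0) with (f y) by (apply injective_projections; simpl; ring).
  destruct (Req_dec y 0) as [->|Hy0].
  { rewrite H0, Cmod_0. apply cond_pos. }
  assert (Hy1 : Rabs y < eps / (Rabs K + 1)) by (eapply Rlt_le_trans; [exact Hy | apply Rmin_r]).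
  eapply Rle_lt_trans.
  { apply Hb. split. apply Rabs_pos_lt; auto. eapply Rlt_le_trans; [exact Hy | apply Rmin_l]. }
  pose proof (Rabs_pos K). pose proof (Rabs_pos y). pose proof (Rle_abs K).
  apply Rle_lt_trans with ((Rabs K + 1) * Rabs y)%R; [nra |].
  apply Rmult_lt_compat_l with (r := (Rabs K + 1)%R) in Hy1; [| lra].
  eapply Rlt_le_trans; [exact Hy1 | right; field; lra].
Qed.

(* The mean value theorem is applied to each component, hence the factor [2]. *)
Lemma mean_value_ineq_C (f f' : R -> C) a b B :
  (forall p, Rmin a b <= p <= Rmax a b -> is_derive_C f p (f' p)) ->
  (forall p, Rmin a b <= p <= Rmax a b -> Cmod (f' p) <= B) ->
  Cmod (f b - f a) <= 2 * B * Rabs (b - a).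
Proof.
  intros Hd Hb.
  destruct (MVT_gen (fun t => fst (f t)) a b (fun t => fst (f' t))) as [c1 [Hc1 E1]].
  { intros x Hx. apply is_derive_C_fst, Hd. lra. }
  { intros x Hx. eapply is_derive_continuity_pt, is_derive_C_fst, Hd. lra. }
  destruct (MVT_gen (fun t => snd (f t)) a b (fun t => snd (f' t))) as [c2 [Hc2 E2]].
  { intros x Hx. apply is_derive_C_snd, Hd. lra. }
  { intros x Hx. eapply is_derive_continuity_pt, is_derive_C_snd, Hd. lra. }
  eapply Rle_trans. apply Cmod_le_Rabs_fst_snd.
  replace (fst (f b - f a)) with (fst (f b) - fst (f a))%R by (simpl; ring).
  replace (snd (f b - f a)) with (snd (f b) - snd (f a))%R by (simpl; ring).
  rewrite E1, E2, !Rabs_mult.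
  pose proof (Rabs_fst_le_Cmod (f' c1)). pose proof (Rabs_snd_le_Cmod (f' c2)).
  pose proof (Hb c1 Hc1). pose proof (Hb c2 Hc2). pose proof (Rabs_pos (b - a)).
  nra.
Qed.

Lemma exp_le x y : x <= y -> exp x <= exp y.
Proof. intros [H|H]. left; apply exp_increasing; auto. right; subst; auto. Qed.

Lemma ln_le_sub_1 x : 0 < x -> ln x <= x - 1.
Proof. intros H. pose proof (exp_ineq1_le (ln x)). rewrite exp_ln in H0 by auto. lra. Qed.

Lemma ln_nonpos x : 0 < x <= 1 -> ln x <= 0.
Proof. intros H. rewrite <- ln_1. apply ln_le; lra. Qed.

(* [σ ln] lies below its tangent line at [2σ]. *)
Lemma ln_le_linear σ t : 0 < σ -> 0 < t -> σ * ln t <= t / 2 + σ * (ln (2 * σ) - 1).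
Proof.
  intros Hs Ht.
  assert (E : ln t = (ln (t / (2 * σ)) + ln (2 * σ))%R).
  { rewrite <- ln_mult. f_equal. field. lra. apply Rdiv_lt_0_compat; lra. lra. }
  pose proof (ln_le_sub_1 (t / (2 * σ)) ltac:(apply Rdiv_lt_0_compat; lra)).
  rewrite E. replace (t / 2)%R with (σ * (t / (2 * σ)))%R by (field; lra). nra.
Qed.

Lemma cexp_add a b : cexp (a + b) = cexp a * cexp b.
Proof.
  destruct a as [a1 a2], b as [b1 b2]. unfold cexp; simpl.
  rewrite exp_plus, cos_plus, sin_plus. apply injective_projections; simpl; ring.
Qed.

Lemma cexp_0 : cexp 0 = 1.
Proof. unfold cexp; simpl. rewrite exp_0, cos_0, sin_0. apply injective_projections; simpl; ring. Qed.

Lemma cexp_opp_mul z : cexp (- z) * cexp z = 1.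
Proof. rewrite <- cexp_add, <- cexp_0. f_equal. ring. Qed.

Lemma cexp_RtoC (r : R) : cexp (RtoC r) = RtoC (exp r).
Proof. unfold cexp; simpl. rewrite cos_0, sin_0. apply injective_projections; simpl; ring. Qed.

Lemma Cmod_cexp z : Cmod (cexp z) = exp (fst z).
Proof.
  destruct z as [a b]. unfold cexp, Cmod; simpl.
  replace (exp a * cos b * (exp a * cos b * 1) + exp a * sin b * (exp a * sin b * 1))%R
    with (exp a * exp a * (Rsqr (sin b) + Rsqr (cos b)))%R by (unfold Rsqr; ring).
  rewrite sin2_cos2, Rmult_1_r. apply sqrt_square. left; apply exp_pos.
Qed.

Lemma rpowC_pos x s : 0 < x -> rpowC x s = cexp (s * RtoC (ln x)).
Proof. intros H. unfold rpowC. destruct (Rlt_dec 0 x); [reflexivity | lra]. Qed.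

Lemma rpowC_nonpos x s : x <= 0 -> rpowC x s = 0.
Proof. intros H. unfold rpowC. destruct (Rlt_dec 0 x); [lra | reflexivity]. Qed.

Lemma Cmod_rpowC x s : 0 < x -> Cmod (rpowC x s) = exp (fst s * ln x).
Proof. intros H. rewrite rpowC_pos, Cmod_cexp by auto. destruct s; simpl; f_equal; ring. Qed.

Lemma Cmod_rpowC_le x s : 0 < x < 1 -> 1 <= fst s -> Cmod (rpowC x s) <= x.
Proof.
  intros Hx Hs. rewrite Cmod_rpowC by lra.
  rewrite <- (exp_ln x) at 2 by lra. apply exp_le.
  assert (ln x < 0). { rewrite <- ln_1. apply ln_increasing; lra. }
  nra.
Qed.

Lemma is_derive_C_rpowC (s : C) x : 0 < x -> is_derive_C (fun t => rpowC t s) x (s * RtoC (/ x) * rpowC x s).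
Proof.
  intros Hx.
  apply is_derive_ext_loc with (f := fun t => cexp (s * RtoC (ln t))).
  { apply locally_interval with (a := Finite 0%R) (b := p_infty); simpl; auto.
    intros y Hy _. rewrite rpowC_pos; auto. }
  rewrite rpowC_pos by auto.
  apply is_derive_C_cexp, is_derive_C_scal, is_derive_C_RtoC, is_derive_ln; auto.
Qed.

Lemma is_RInt_Cmult_l (c : C) (f : R -> C) a b (l : C) :
  is_CInt f a b l -> is_CInt (fun t => c * f t) a b (c * l).
Proof.
  intros H.
  pose proof (is_RInt_fct_extend_fst _ _ _ _ H) as H1.
  pose proof (is_RInt_fct_extend_snd _ _ _ _ H) as H2.
  simpl in H1, H2.
  replace (c * l) with ((fst c * fst l - snd c * snd l)%R, (fst c * snd l + snd c * fst l)%R)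
    by (destruct c, l; reflexivity).
  apply (is_RInt_fct_extend_pair (U:=R_NormedModule) (V:=R_NormedModule)); simpl.
  - eapply is_RInt_ext; [| apply (is_RInt_minus (V:=R_NormedModule) _ _ _ _ _ _
        (is_RInt_scal _ _ _ (fst c) _ H1) (is_RInt_scal _ _ _ (snd c) _ H2))].
    intros x _. reflexivity.
  - eapply is_RInt_ext; [| apply (is_RInt_plus (V:=R_NormedModule) _ _ _ _ _ _
        (is_RInt_scal _ _ _ (fst c) _ H2) (is_RInt_scal _ _ _ (snd c) _ H1))].
    intros x _. reflexivity.
Qed.

Lemma CInt_Cmult_l (c : C) (f g : R -> C) a b :
  ex_CInt f a b -> (forall x, Rmin a b < x < Rmax a b -> g x = c * f x) ->
  CInt g a b = c * CInt f a b.
Proof.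
  intros Hex Hfg. unfold CInt. apply (is_RInt_unique (V:=C_R_CompleteNormedModule)).
  eapply is_RInt_ext. intros x Hx. symmetry. apply Hfg. exact Hx.
  apply is_RInt_Cmult_l. apply (RInt_correct (V:=C_R_CompleteNormedModule)). exact Hex.
Qed.

Lemma CInt_Chasles (f : R -> C) a b c :
  ex_CInt f a b -> ex_CInt f b c -> CInt f a c = CInt f a b + CInt f b c.
Proof. intros Hab Hbc. unfold CInt. rewrite <- (RInt_Chasles (V:=C_R_CompleteNormedModule) f a b c); auto. Qed.

Lemma Cmod_CInt_le_const (f : R -> C) a b M : a <= b -> ex_CInt f a b ->
  (forall x, a <= x <= b -> Cmod (f x) <= M) -> Cmod (CInt f a b) <= (b - a) * M.
Proof.
  intros Hab Hex Hb. rewrite <- norm_C. unfold CInt.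
  apply (norm_RInt_le_const (V:=C_R_NormedModule) f a b _ M Hab).
  - intros x Hx. rewrite norm_C. apply Hb; auto.
  - apply (RInt_correct (V:=C_R_CompleteNormedModule)). auto.
Qed.

Lemma Cmod_CInt_le_exp_decay (f : R -> C) a b K lam : 0 < lam -> a <= b -> ex_CInt f a b ->
  (forall t, a <= t <= b -> Cmod (f t) <= K * exp (- lam * t)) ->
  Cmod (CInt f a b) <= K / lam * exp (- lam * a).
Proof.
  intros Hl Hab Hex Hf.
  assert (HK : 0 <= K).
  { pose proof (Hf a (conj (Rle_refl _) Hab)). pose proof (Cmod_ge_0 (f a)). pose proof (exp_pos (- lam * a)).
    destruct (Rle_dec 0 K); auto. nra. }
  set (F := fun t => (- (K / lam) * exp (- lam * t))%R).
  assert (HF : forall x, is_derive F x (K * exp (- lam * x))%R).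
  { intros x. unfold F. eapply is_derive_eq.
    - apply is_derive_scal, (is_derive_comp exp), is_derive_scal. apply is_derive_exp. apply is_derive_id.
    - change scal with Rmult. change one with 1%R. simpl. field. lra. }
  assert (HI : is_RInt (fun t => K * exp (- lam * t))%R a b (minus (F b) (F a))).
  { apply (is_RInt_derive (V:=R_CompleteNormedModule) F).
    - intros x _. apply HF.
    - intros x _. apply continuity_pt_filterlim. eapply is_derive_continuity_pt.
      apply is_derive_scal, (is_derive_comp exp), is_derive_scal. apply is_derive_exp. apply is_derive_id. }
  rewrite <- norm_C. unfold CInt.
  eapply Rle_trans.
  { apply (norm_RInt_le (V:=C_R_NormedModule) f (fun t => K * exp (- lam * t))%R a b _ _ Hab).
    - intros x Hx. rewrite norm_C. apply Hf; auto.
    - apply (RInt_correct (V:=C_R_CompleteNormedModule)); auto.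
    - exact HI. }
  unfold F. change (minus ?x ?y) with (x - y)%R.
  pose proof (exp_pos (- lam * b)). assert (0 <= K / lam) by (apply Rdiv_le_0_compat; lra).
  nra.
Qed.

Lemma Cmod_taylor1_le (h dh d2h : R -> C) φ0 y M :
  (forall φ, Rabs (φ - φ0) < 1 -> is_derive_C h φ (dh φ)) ->
  (forall φ, Rabs (φ - φ0) < 1 -> is_derive_C dh φ (d2h φ)) ->
  (forall φ, Rabs (φ - φ0) < 1 -> Cmod (d2h φ) <= M) ->
  Rabs (y - φ0) < 1 ->
  Cmod (h y - h φ0 - RtoC (y - φ0) * dh φ0) <= 4 * M * (Rabs (y - φ0))^2.
Proof.
  intros Hh Hdh Hb Hy.
  assert (Hin : forall p, Rmin φ0 y <= p <= Rmax φ0 y -> Rabs (p - φ0) <= Rabs (y - φ0)).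
  { intros p Hp. unfold Rmin, Rmax in Hp; destruct (Rle_dec φ0 y);
    unfold Rabs; destruct (Rcase_abs (p - φ0)), (Rcase_abs (y - φ0)); lra. }
  assert (HM : 0 <= M).
  { eapply Rle_trans; [apply Cmod_ge_0 | apply (Hb φ0)]. rewrite Rminus_diag, Rabs_R0; lra. }
  assert (Hdiff : forall p, Rmin φ0 y <= p <= Rmax φ0 y -> Cmod (dh p - dh φ0) <= 2 * M * Rabs (y - φ0)).
  { intros p Hp. pose proof (Hin p Hp).
    assert (Hq : forall q, Rmin φ0 p <= q <= Rmax φ0 p -> Rabs (q - φ0) < 1).
    { intros q Hq. unfold Rmin, Rmax in Hp, Hq; destruct (Rle_dec φ0 y), (Rle_dec φ0 p);
      apply Rabs_def2 in Hy; apply Rabs_def1; lra. }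
    eapply Rle_trans.
    - apply (mean_value_ineq_C dh d2h φ0 p M); intros q Hq'; [apply Hdh | apply Hb]; auto.
    - nra. }
  pose proof (mean_value_ineq_C (fun p => h p - RtoC p * dh φ0) (fun p => dh p - dh φ0) φ0 y
                (2 * M * Rabs (y - φ0))) as H.
  replace (h y - h φ0 - RtoC (y - φ0) * dh φ0)
    with (h y - RtoC y * dh φ0 - (h φ0 - RtoC φ0 * dh φ0)) by (apply injective_projections; simpl; ring).
  eapply Rle_trans; [apply H | simpl; nra]; clear H.
  - intros p Hp. eapply is_derive_eq.
    + apply is_derive_C_minus. apply Hh. pose proof (Hin p Hp); lra.
      apply is_derive_C_mult. apply is_derive_C_id. apply is_derive_C_const.
    + apply injective_projections; simpl; ring.
  - exact Hdiff.
Qed.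

Lemma is_derive_C_of_quadratic_remainder (F : R -> C) φ0 L K :
  (forall y, Rabs (y - φ0) < 1 -> Cmod (F y - F φ0 - RtoC (y - φ0) * L) <= K * (Rabs (y - φ0))^2) ->
  is_derive_C F φ0 L.
Proof.
  intros HF. split. apply is_linear_scal_l.
  intros x0 Hx0. apply (is_filter_lim_locally_unique (K:=R_AbsRing) (V:=AbsRing_NormedModule R_AbsRing)) in Hx0.
  subst x0. intros eps.
  set (δ := Rmin 1 (eps / (Rabs K + 1))).
  assert (Hδ : 0 < δ). { apply Rmin_pos. lra. apply Rdiv_lt_0_compat. apply cond_pos. pose proof (Rabs_pos K); lra. }
  exists (mkposreal _ Hδ). intros y Hy.
  change (Rabs (y - φ0) < δ) in Hy.
  change (norm (minus y φ0)) with (Rabs (y - φ0)).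
  rewrite norm_C, scal_C.
  assert (Hy1 : Rabs (y - φ0) < 1) by (eapply Rlt_le_trans; [exact Hy | apply Rmin_l]).
  assert (Hy2 : Rabs (y - φ0) * (Rabs K + 1) <= eps).
  { apply Rmult_le_reg_r with (/ (Rabs K + 1))%R. pose proof (Rabs_pos K). apply Rinv_0_lt_compat; lra.
    rewrite Rmult_assoc, Rinv_r by (pose proof (Rabs_pos K); lra). rewrite Rmult_1_r.
    left. eapply Rlt_le_trans; [exact Hy | apply Rmin_r]. }
  eapply Rle_trans; [apply (HF y Hy1) |].
  pose proof (Rabs_pos (y - φ0)). pose proof (Rle_abs K). simpl. nra.
Qed.

Lemma is_derive_CInt_param (g dg d2g : R -> R -> C) (a b φ0 M : R) :
  a <= b ->
  (forall φ x, Rabs (φ - φ0) < 1 -> a <= x <= b -> is_derive_C (fun p => g p x) φ (dg φ x)) ->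
  (forall φ x, Rabs (φ - φ0) < 1 -> a <= x <= b -> is_derive_C (fun p => dg p x) φ (d2g φ x)) ->
  (forall φ x, Rabs (φ - φ0) < 1 -> a <= x <= b -> Cmod (d2g φ x) <= M) ->
  (forall φ, Rabs (φ - φ0) < 1 -> ex_CInt (g φ) a b) ->
  ex_CInt (dg φ0) a b ->
  is_derive_C (fun φ => CInt (g φ) a b) φ0 (CInt (dg φ0) a b).
Proof.
  intros Hab Hg Hdg Hb Hexg Hexd.
  apply is_derive_C_of_quadratic_remainder with (K := (4 * M * (b - a))%R).
  intros y Hy.
  assert (H00 : Rabs (φ0 - φ0) < 1) by (rewrite Rminus_diag, Rabs_R0; lra).
  pose proof (is_RInt_minus _ _ _ _ _ _
    (is_RInt_minus _ _ _ _ _ _ (RInt_correct _ _ _ (Hexg y Hy)) (RInt_correct _ _ _ (Hexg φ0 H00)))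
    (is_RInt_Cmult_l (RtoC (y - φ0)) _ _ _ _ (RInt_correct _ _ _ Hexd))) as Hrem.
  rewrite <- norm_C. unfold CInt.
  replace ((4 * M * (b - a)) * Rabs (y - φ0) ^ 2)%R with ((b - a) * (4 * M * Rabs (y - φ0) ^ 2))%R by ring.
  refine (norm_RInt_le_const _ a b _ _ Hab _ Hrem).
  intros x Hx. simpl. rewrite norm_C.
  apply (Cmod_taylor1_le (fun p => g p x) (fun p => dg p x) (fun p => d2g p x)); auto.
Qed.

(** * The substitution [z = e^t] and the asymptotics of [S_n] *)

Definition phase (n : R) (w v : C) (t : R) : C := RtoC n * ptilde w t + v * RtoC t.

Definition S_integrand (n : R) (w v : C) (x : R) : C :=
  cexp (RtoC n * w * RtoC (1 - x)) * rpowC x (RtoC n + v).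

Section Substitution.
Variables (n : R) (w v : C).

Lemma integrand_cexp_phase t : integrand n w v t = cexp (phase n w v t).
Proof. unfold integrand, phase. rewrite cexp_add. reflexivity. Qed.

Lemma phase_0 : phase n w v 0 = 0.
Proof. unfold phase, ptilde. rewrite exp_0. apply injective_projections; simpl; ring. Qed.

Lemma Cmod_cexp_phase t : Cmod (cexp (phase n w v t)) = exp (n * (fst w * (1 - exp t) + t) + fst v * t).
Proof. rewrite Cmod_cexp. f_equal. unfold phase, ptilde. simpl. ring. Qed.

Lemma is_derive_C_phase t : is_derive_C (phase n w v) t ((RtoC n + v) - RtoC n * w * RtoC (exp t)).
Proof.
  unfold phase, ptilde. eapply is_derive_eq.
  - apply is_derive_C_plus; apply is_derive_C_scal; [apply is_derive_C_plus | apply is_derive_C_id].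
    apply is_derive_C_scal, is_derive_C_minus. apply is_derive_C_const.
    apply is_derive_C_RtoC, is_derive_exp. apply is_derive_C_id.
  - apply injective_projections; simpl; ring.
Qed.

Lemma S_integrand_exp t : S_integrand n w v (exp t) = cexp (phase n w v t).
Proof.
  unfold S_integrand. rewrite rpowC_pos by apply exp_pos. rewrite ln_exp, <- cexp_add.
  f_equal. unfold phase, ptilde. apply injective_projections; simpl; ring.
Qed.

Lemma Cmod_S_integrand x : 0 < x ->
  Cmod (S_integrand n w v x) = exp (n * fst w * (1 - x) + (n + fst v) * ln x).
Proof.
  intros Hx. unfold S_integrand. rewrite Cmod_mult, Cmod_cexp, Cmod_rpowC, <- exp_plus by auto.
  f_equal. destruct w; simpl; ring.
Qed.

Lemma continuous_S_integrand_pos x : 0 < x -> continuous_C (S_integrand n w v) x.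
Proof.
  intros Hx. eapply is_derive_C_continuous. unfold S_integrand. apply is_derive_C_mult.
  - apply is_derive_C_cexp, is_derive_C_scal, is_derive_C_RtoC.
    apply is_derive_Rminus. apply (is_derive_const (K:=R_AbsRing) (V:=R_NormedModule)). apply is_derive_id.
  - apply is_derive_C_rpowC; auto.
Qed.

Lemma is_CInt_deriv_cexp_phase α β :
  is_CInt (fun t => ((RtoC n + v) - RtoC n * w * RtoC (exp t)) * cexp (phase n w v t)) α β
          (cexp (phase n w v β) - cexp (phase n w v α)).
Proof.
  apply (is_RInt_derive (V:=C_R_CompleteNormedModule) (fun t => cexp (phase n w v t))).
  - intros x _. apply is_derive_C_cexp, is_derive_C_phase.
  - intros x _. eapply is_derive_C_continuous. apply is_derive_C_mult; [| apply is_derive_C_cexp, is_derive_C_phase].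
    apply is_derive_C_minus. apply is_derive_C_const. apply is_derive_C_scal, is_derive_C_RtoC, is_derive_exp.
Qed.

Hypothesis Hnv : 1 <= n + fst v.

Lemma continuous_S_integrand x : 0 <= x -> continuous_C (S_integrand n w v) x.
Proof.
  intros [Hx | <-]; [apply continuous_S_integrand_pos; auto |].
  apply (continuous_C_at_0_of_linear_bound _ (exp (Rabs (n * fst w)))).
    { unfold S_integrand. rewrite rpowC_nonpos by lra. apply injective_projections; simpl; ring. }
    intros y Hy. destruct (Rle_lt_dec y 0) as [Hy0 | Hy0].
    { unfold S_integrand. rewrite rpowC_nonpos, Cmult_0_r, Cmod_0 by lra.
      apply Rmult_le_pos. left; apply exp_pos. apply Rabs_pos. }
    assert (Hy1 : y < 1) by (rewrite Rabs_right in Hy; lra).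
    rewrite (Rabs_right y) by lra.
    unfold S_integrand. rewrite Cmod_mult, Cmod_cexp.
    apply Rmult_le_compat; [left; apply exp_pos | apply Cmod_ge_0 | | apply Cmod_rpowC_le; simpl; lra].
    apply exp_le. pose proof (Rle_abs (n * fst w)). pose proof (Rabs_pos (n * fst w)). simpl.
    destruct (Rle_dec 0 (n * fst w)); nra.
Qed.

Lemma ex_RInt_S_integrand a b : 0 <= a -> 0 <= b -> ex_CInt (S_integrand n w v) a b.
Proof.
  intros Ha Hb. apply ex_RInt_continuous. intros z [Hz _]. apply continuous_S_integrand.
  eapply Rle_trans; [apply Rmin_glb | exact Hz]; auto.
Qed.

End Substitution.

Lemma CInt_integrand_subst n w v α β :
  (RtoC n + v) * CInt (integrand n w v) α β =
  cexp (phase n w v β) - cexp (phase n w v α) + RtoC n * w * CInt (S_integrand n w v) (exp α) (exp β).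
Proof.
  assert (Hex : ex_CInt (integrand n w v) α β).
  { apply ex_RInt_continuous. intros t _. eapply is_derive_C_continuous.
    eapply is_derive_ext. intros x; symmetry; apply integrand_cexp_phase.
    apply is_derive_C_cexp, is_derive_C_phase. }
  assert (Hsubst : is_CInt (fun y => scal (exp y) (S_integrand n w v (exp y))) α β
                     (CInt (S_integrand n w v) (exp α) (exp β))).
  { apply (is_RInt_comp (V:=C_R_CompleteNormedModule)).
    - intros x _. apply continuous_S_integrand_pos, exp_pos.
    - intros x _. split. apply is_derive_exp.
      apply continuity_pt_filterlim. eapply is_derive_continuity_pt. apply is_derive_exp. }
  assert (H : is_CInt (fun t => ((RtoC n + v) - RtoC n * w * RtoC (exp t)) * cexp (phase n w v t)) α β
                ((RtoC n + v) * CInt (integrand n w v) α β - RtoC n * w * CInt (S_integrand n w v) (exp α) (exp β))).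
  { eapply is_RInt_ext; [| exact (is_RInt_minus _ _ _ _ _ _
        (is_RInt_Cmult_l (RtoC n + v) _ _ _ _ (RInt_correct _ _ _ Hex))
        (is_RInt_Cmult_l (RtoC n * w) _ _ _ _ Hsubst))].
    intros x _. cbv beta. rewrite scal_C, S_integrand_exp, integrand_cexp_phase.
    change (minus ?a ?b) with (a - b). apply injective_projections; simpl; ring. }
  pose proof (is_RInt_unique (V:=C_R_CompleteNormedModule) _ _ _ _ H) as E1.
  pose proof (is_RInt_unique (V:=C_R_CompleteNormedModule) _ _ _ _ (is_CInt_deriv_cexp_phase n w v α β)) as E2.
  assert (E : (RtoC n + v) * CInt (integrand n w v) α β - RtoC n * w * CInt (S_integrand n w v) (exp α) (exp β)
              = cexp (phase n w v β) - cexp (phase n w v α)) by (rewrite <- E1, <- E2; reflexivity).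
  rewrite <- E. ring.
Qed.


Lemma mul_exp_neg_le c x : 0 < c -> x * exp (- (c * x)) <= / c.
Proof.
  intros Hc. pose proof (exp_ineq1_le (c * x)).
  assert (E : (exp (c * x) * exp (- (c * x)) = 1)%R) by (rewrite <- exp_plus, <- exp_0; f_equal; ring).
  pose proof (exp_pos (- (c * x))).
  apply Rmult_le_reg_l with c; [lra |]. rewrite Rinv_r by lra. nra.
Qed.

Lemma exp_neg_2_bounds : 0 < exp (-2) < 1.
Proof. split; [apply exp_pos | rewrite <- exp_0; apply exp_increasing; lra]. Qed.

Lemma S_n_sub_CInt_integrand n w v : 1 <= n + fst v ->
  S_n n w v - (RtoC n + v) * CInt (integrand n w v) (-2) 0
  = RtoC n * w * CInt (S_integrand n w v) 0 (exp (-2)) + cexp (phase n w v (-2)).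
Proof.
  intros Hnv.
  pose proof exp_neg_2_bounds as He.
  rewrite CInt_integrand_subst, exp_0, phase_0, cexp_0.
  change (S_n n w v) with (1 + RtoC n * w * CInt (S_integrand n w v) 0 1).
  rewrite (CInt_Chasles _ 0 (exp (-2)) 1) by (apply ex_RInt_S_integrand; lra).
  ring.
Qed.

Section LeftHalfPlane.
Variables (n : R) (w v : C).
Hypothesis Hw : fst w <= 1.
Hypothesis Hn : 0 <= n.

Lemma Cmod_cexp_phase_neg2_le : Cmod (cexp (phase n w v (-2))) <= exp (- n - 2 * fst v).
Proof.
  rewrite Cmod_cexp_phase. apply exp_le.
  pose proof exp_neg_2_bounds as He.
  assert (fst w * (1 - exp (-2)) <= 1) by nra.
  nra.
Qed.

Lemma Cmod_S_integrand_le_near_0 x : 1 <= n + fst v -> 0 <= x <= exp (-2) ->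
  Cmod (S_integrand n w v x) <= exp (- n - 2 * fst v).
Proof.
  intros Hnv Hx. destruct (Req_dec x 0) as [-> | Hx0].
  { unfold S_integrand. rewrite rpowC_nonpos, Cmult_0_r, Cmod_0 by lra. left; apply exp_pos. }
  rewrite Cmod_S_integrand by lra. apply exp_le.
  assert (Hl : ln x <= -2) by (rewrite <- (ln_exp (-2)); apply ln_le; lra).
  pose proof exp_neg_2_bounds as He.
  assert (fst w * (1 - x) <= 1) by nra.
  nra.
Qed.

End LeftHalfPlane.

Theorem S_n_asymptotics (w v : C) : Re w <= 1 ->
  exists K N : R, forall n : R, N <= n ->
    Cmod (S_n n w v - (RtoC n + v) * CInt (integrand n w v) (-2) 0) <= K * exp (- n / 2).
Proof.
  intros Hw. unfold Re in Hw.
  exists (exp (- 2 * fst v) * (2 * Cmod w + 1))%R, (1 + Rabs (fst v))%R.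
  intros n Hn.
  pose proof (Rle_abs (- fst v)) as Hv. rewrite Rabs_Ropp in Hv.
  assert (Hnv : 1 <= n + fst v) by lra.
  assert (Hn0 : 0 <= n) by (pose proof (Rabs_pos (fst v)); lra).
  pose proof exp_neg_2_bounds as He.
  assert (HE : exp (- n - 2 * fst v) = (exp (- n / 2) * exp (- n / 2) * exp (- 2 * fst v))%R)
    by (rewrite <- !exp_plus; f_equal; field).
  assert (HI : Cmod (CInt (S_integrand n w v) 0 (exp (-2))) <= exp (- n - 2 * fst v)).
  { eapply Rle_trans.
    - apply Cmod_CInt_le_const. lra. apply ex_RInt_S_integrand; lra.
      intros x Hx. apply Cmod_S_integrand_le_near_0; auto.
    - pose proof (exp_pos (- n - 2 * fst v)). nra. }
  pose proof (Cmod_cexp_phase_neg2_le n w v Hw Hn0) as HU.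
  pose proof (mul_exp_neg_le (1 / 2) n ltac:(lra)) as Hmul.
  replace (- (1 / 2 * n))%R with (- n / 2)%R in Hmul by field.
  replace (/ (1 / 2))%R with 2%R in Hmul by field.
  rewrite S_n_sub_CInt_integrand by exact Hnv.
  eapply Rle_trans. apply Cmod_triangle. rewrite !Cmod_mult, Cmod_R, Rabs_right by lra.
  rewrite HE in HI, HU.
  pose proof (exp_pos (- n / 2)). pose proof (exp_pos (- 2 * fst v)). pose proof (Cmod_ge_0 w).
  assert (exp (- n / 2) <= 1) by (rewrite <- exp_0; apply exp_le; lra).
  pose proof (Cmod_ge_0 (CInt (S_integrand n w v) 0 (exp (-2)))).
  apply Rle_trans with (Cmod w * (n * exp (- n / 2)) * exp (- n / 2) * exp (- 2 * fst v)
                        + exp (- n / 2) * exp (- 2 * fst v))%R.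
  - apply Rplus_le_compat; [| nra].
    replace (Cmod w * (n * exp (- n / 2)) * exp (- n / 2) * exp (- 2 * fst v))%R
      with (n * Cmod w * (exp (- n / 2) * exp (- n / 2) * exp (- 2 * fst v)))%R by ring.
    apply Rmult_le_compat_l; nra.
  - assert (Cmod w * (n * exp (- n / 2)) <= Cmod w * 2) by (apply Rmult_le_compat_l; lra).
    assert (0 < exp (- n / 2) * exp (- 2 * fst v)) by (apply Rmult_lt_0_compat; lra).
    nra.
Qed.

(** * The Gamma integral *)

Lemma exp_neg_eventually_le c τ : 0 < c -> 0 < τ -> exists b0, 1 <= b0 /\ forall b, b0 <= b -> exp (- c * b) <= τ.
Proof.
  intros Hc Hτ. exists (1 + Rabs (ln τ) / c)%R.
  assert (0 <= Rabs (ln τ) / c) by (apply Rdiv_le_0_compat; [apply Rabs_pos | lra]).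
  split; [lra |]. intros b Hb. rewrite <- (exp_ln τ Hτ). apply exp_le.
  pose proof (Rle_abs (- ln τ)). rewrite Rabs_Ropp in H0.
  apply Rmult_le_compat_l with (r := c) in Hb; [| lra].
  replace (c * (1 + Rabs (ln τ) / c))%R with (c + Rabs (ln τ))%R in Hb by (field; lra). lra.
Qed.

Section ImproperIntegral.
Variables (f : R -> C) (B K lam : R).
Hypothesis Hlam : 0 < lam.
Hypothesis Hex : forall a b, 0 < a -> 0 < b -> ex_CInt f a b.
Hypothesis Hsmall : forall t, 0 < t <= 1 -> Cmod (f t) <= B.
Hypothesis Hlarge : forall t, 1 <= t -> Cmod (f t) <= K * exp (- lam * t).

Let F := filter_prod (at_right 0) (Rbar_locally p_infty).
Let I := fun ab : R * R => (CInt f (fst ab) (snd ab) : C_R_CompleteNormedModule).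

Lemma cauchy_CInt_0_pinfty : cauchy (filtermap I F).
Proof.
  intros eps. pose proof (cond_pos eps) as He.
  assert (HK : 0 <= K).
  { pose proof (Hlarge 1 (Rle_refl _)). pose proof (Cmod_ge_0 (f 1)). pose proof (exp_pos (- lam * 1)). nra. }
  set (a0 := Rmin (1/2) (eps / (4 * (Rabs B + 1)))).
  assert (Ha0 : 0 < a0 <= 1/2).
  { split. apply Rmin_pos. lra. apply Rdiv_lt_0_compat. lra. pose proof (Rabs_pos B); lra. apply Rmin_l. }
  assert (Ha0' : a0 * (Rabs B + 1) <= eps / 4).
  { pose proof (Rabs_pos B). apply Rmult_le_reg_r with (/ (Rabs B + 1))%R. apply Rinv_0_lt_compat; lra.
    rewrite Rmult_assoc, Rinv_r, Rmult_1_r by lra.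
    eapply Rle_trans; [apply Rmin_r | right; field; lra]. }
  destruct (exp_neg_eventually_le lam (eps * lam / (4 * (K + 1))) Hlam ltac:(apply Rdiv_lt_0_compat; nra))
    as [b0 [Hb0 Hexp]].
  assert (Htail : K / lam * exp (- lam * b0) <= eps / 4).
  { apply Rle_trans with (K / lam * (eps * lam / (4 * (K + 1))))%R.
    - apply Rmult_le_compat_l; [apply Rdiv_le_0_compat; lra | apply Hexp, Rle_refl].
    - replace (K / lam * (eps * lam / (4 * (K + 1))))%R with (eps / 4 * (K / (K + 1)))%R by (field; lra).
      assert (K / (K + 1) <= 1) by (apply Rmult_le_reg_r with (K + 1)%R; [lra | field_simplify; lra]).
      nra. }
  exists (CInt f a0 b0). exists (fun a => 0 < a < a0) (fun b => b0 < b).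
  - exists (mkposreal _ (proj1 Ha0)). intros y Hy Hy0.
    change (Rabs (y - 0) < a0) in Hy. rewrite Rminus_0_r, Rabs_right in Hy by lra. simpl in Hy. lra.
  - exists b0. auto.
  - intros a b Ha Hb. apply ball_C_of_Cmod_lt. unfold I; simpl.
    rewrite (CInt_Chasles f a a0 b), (CInt_Chasles f a0 b0 b) by (apply Hex; lra).
    replace (CInt f a a0 + (CInt f a0 b0 + CInt f b0 b) - CInt f a0 b0)
      with (CInt f a a0 + CInt f b0 b) by ring.
    eapply Rle_lt_trans. apply Cmod_triangle.
    assert (H1 : Cmod (CInt f a a0) <= (a0 - a) * (Rabs B + 1)).
    { apply Cmod_CInt_le_const. lra. apply Hex; lra.
      intros x Hx. pose proof (Hsmall x ltac:(lra)). pose proof (Rle_abs B). lra. }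
    assert (H2 : Cmod (CInt f b0 b) <= K / lam * exp (- lam * b0)).
    { apply Cmod_CInt_le_exp_decay; auto. lra. apply Hex; lra. intros t Ht. apply Hlarge. lra. }
    pose proof (Rabs_pos B). nra.
Qed.

Lemma is_RInt_gen_0_pinfty_lim : is_RInt_gen f (at_right 0) (Rbar_locally p_infty) (lim (filtermap I F)).
Proof.
  assert (PF : ProperFilter (filtermap I F)) by (apply filtermap_proper_filter, filter_prod_proper).
  pose proof (complete_cauchy (filtermap I F) PF cauchy_CInt_0_pinfty) as HC.
  intros P [eps HP].
  assert (Hpos : F (fun ab : R * R => 0 < fst ab /\ 0 < snd ab)).
  { exists (fun a => 0 < a) (fun b => 0 < b).
    - exists (mkposreal 1 Rlt_0_1). intros; auto.
    - exists 0%R. auto.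
    - intros; simpl; auto. }
  unfold filtermapi.
  apply (filter_imp (fun ab : R * R => ball (lim (filtermap I F)) eps (I ab) /\ (0 < fst ab /\ 0 < snd ab))).
  2: { apply filter_and; [exact (HC eps) | exact Hpos]. }
  intros [a b] [H1 [H2 H3]]. simpl in *.
  exists (CInt f a b). split.
  - apply (RInt_correct (V:=C_R_CompleteNormedModule)). apply Hex; auto.
  - apply HP. exact H1.
Qed.

End ImproperIntegral.

Definition Gamma_integrand (s : C) (t : R) : C := rpowC t s * RtoC (exp (- t)).

Section GammaIntegral.
Variable s : C.
Hypothesis Hs : 1 <= fst s.

Lemma Cmod_Gamma_integrand t : 0 < t -> Cmod (Gamma_integrand s t) = exp (fst s * ln t - t).
Proof.
  intros Ht. unfold Gamma_integrand.
  rewrite Cmod_mult, Cmod_rpowC, Cmod_R, Rabs_right, <- exp_plus by (auto; left; apply exp_pos).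
  reflexivity.
Qed.

Lemma ex_RInt_Gamma_integrand a b : 0 < a -> 0 < b -> ex_CInt (Gamma_integrand s) a b.
Proof.
  intros Ha Hb. apply ex_RInt_continuous. intros z [Hz _]. eapply is_derive_C_continuous.
  apply is_derive_C_mult.
  - apply is_derive_C_rpowC. eapply Rlt_le_trans; [apply Rmin_glb_lt | exact Hz]; auto.
  - apply is_derive_C_RtoC, (is_derive_comp exp). apply is_derive_exp.
    apply (is_derive_opp (K:=R_AbsRing) (fun t => t)), is_derive_id.
Qed.

Lemma Cmod_Gamma_integrand_le_1 t : 0 < t <= 1 -> Cmod (Gamma_integrand s t) <= 1.
Proof.
  intros Ht. rewrite Cmod_Gamma_integrand, <- exp_0 by lra. apply exp_le.
  pose proof (ln_nonpos t Ht). nra.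
Qed.

Lemma Cmod_Gamma_integrand_le_exp t : 0 < t ->
  Cmod (Gamma_integrand s t) <= exp (fst s * (ln (2 * fst s) - 1)) * exp (- (1 / 2) * t).
Proof.
  intros Ht. rewrite Cmod_Gamma_integrand, <- exp_plus by lra. apply exp_le.
  pose proof (ln_le_linear (fst s) t ltac:(lra) Ht). lra.
Qed.

Lemma is_RInt_gen_CGamma :
  is_RInt_gen (V:=C_R_NormedModule) (Gamma_integrand s) (at_right 0) (Rbar_locally p_infty) (CGamma (s + 1)).
Proof.
  pose proof (is_RInt_gen_0_pinfty_lim (Gamma_integrand s) 1 _ (1 / 2) ltac:(lra)
    ex_RInt_Gamma_integrand Cmod_Gamma_integrand_le_1 (fun t Ht => Cmod_Gamma_integrand_le_exp t ltac:(lra))) as H.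
  unfold CGamma. replace (s + 1 - 1) with s by ring. fold (Gamma_integrand s).
  rewrite (is_RInt_gen_unique (V:=C_R_CompleteNormedModule) _ _ H). exact H.
Qed.

End GammaIntegral.

Definition laplace_integrand (s a : C) (x : R) : C := rpowC x s * cexp (- a * RtoC x).

Section LaplaceIntegrand.
Variables (s a : C).

Lemma Cmod_laplace_integrand x : 0 < x -> Cmod (laplace_integrand s a x) = exp (fst s * ln x - fst a * x).
Proof.
  intros Hx. unfold laplace_integrand. rewrite Cmod_mult, Cmod_rpowC, Cmod_cexp, <- exp_plus by auto.
  f_equal. destruct a; simpl; ring.
Qed.

Hypothesis Hs : 1 <= fst s.

Lemma Cmod_laplace_integrand_le_1 x : 0 <= fst a -> 0 <= x <= 1 -> Cmod (laplace_integrand s a x) <= 1.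
Proof.
  intros Ha Hx. destruct (Req_dec x 0) as [-> | Hx0].
  { unfold laplace_integrand. rewrite rpowC_nonpos, Cmult_0_l, Cmod_0 by lra. lra. }
  rewrite Cmod_laplace_integrand, <- exp_0 by lra. apply exp_le.
  pose proof (ln_nonpos x ltac:(lra)). nra.
Qed.

Lemma continuous_laplace_integrand x : 0 <= x -> continuous_C (laplace_integrand s a) x.
Proof.
  intros [Hx | <-].
  - eapply is_derive_C_continuous. apply is_derive_C_mult.
    + apply is_derive_C_rpowC; auto.
    + apply is_derive_C_cexp, is_derive_C_scal, is_derive_C_id.
  - apply (continuous_C_at_0_of_linear_bound _ (exp (Rabs (fst a)))).
    { unfold laplace_integrand. rewrite rpowC_nonpos, Cmult_0_l by lra. reflexivity. }
    intros y Hy. destruct (Rle_lt_dec y 0) as [Hy0 | Hy0].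
    { unfold laplace_integrand. rewrite rpowC_nonpos, Cmult_0_l, Cmod_0 by lra.
      apply Rmult_le_pos. left; apply exp_pos. apply Rabs_pos. }
    assert (Hy1 : y < 1) by (rewrite Rabs_right in Hy; lra).
    rewrite (Rabs_right y) by lra.
    unfold laplace_integrand. rewrite Cmod_mult, Rmult_comm, Cmod_cexp.
    apply Rmult_le_compat; [left; apply exp_pos | apply Cmod_ge_0 | | apply Cmod_rpowC_le; auto; lra].
    apply exp_le. pose proof (Rle_abs (- fst a)). pose proof (Rabs_pos (fst a)).
    rewrite Rabs_Ropp in H. destruct a; simpl in *. nra.
Qed.

Lemma ex_RInt_laplace_integrand b c : 0 <= b -> 0 <= c -> ex_CInt (laplace_integrand s a) b c.
Proof.
  intros Hb Hc. apply ex_RInt_continuous. intros z [Hz _]. apply continuous_laplace_integrand.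
  eapply Rle_trans; [apply Rmin_glb | exact Hz]; auto.
Qed.

End LaplaceIntegrand.

(** * Rotating the ray of the Gamma integral *)

Definition expi (φ : R) : C := cexp (Ci * RtoC φ).

Lemma expi_eq φ : expi φ = (cos φ, sin φ).
Proof.
  unfold expi, cexp. simpl.
  replace (0 * φ - 1 * 0)%R with 0%R by ring. replace (0 * 0 + 1 * φ)%R with φ by ring.
  rewrite exp_0. apply injective_projections; simpl; ring.
Qed.

Lemma expi_0 : expi 0 = 1.
Proof. rewrite expi_eq, cos_0, sin_0. reflexivity. Qed.

Lemma polar_cexp ρ θ : 0 < ρ -> RtoC ρ * expi θ = cexp (RtoC (ln ρ) + Ci * RtoC θ).
Proof. intros Hρ. unfold expi. rewrite cexp_add, cexp_RtoC, exp_ln by auto. reflexivity. Qed.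

Lemma Cmod_expi φ : Cmod (expi φ) = 1%R.
Proof. unfold expi. rewrite Cmod_cexp. simpl. replace (0 * φ - 1 * 0)%R with 0%R by ring. apply exp_0. Qed.

Lemma is_derive_C_expi φ : is_derive_C expi φ (Ci * expi φ).
Proof. unfold expi. eapply is_derive_C_eq. apply is_derive_C_cexp, is_derive_C_scal, is_derive_C_id. f_equal. ring. Qed.

Lemma cos_Rabs z : cos (Rabs z) = cos z.
Proof. unfold Rabs. destruct (Rcase_abs z). apply cos_neg. reflexivity. Qed.

Lemma cos_le_between θ φ : - PI / 2 < θ < PI / 2 -> Rmin 0 θ <= φ <= Rmax 0 θ -> cos θ <= cos φ.
Proof.
  intros Hθ Hφ. pose proof PI_RGT_0.
  rewrite <- (cos_Rabs θ), <- (cos_Rabs φ).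
  apply cos_decr_1; try apply Rabs_pos;
  unfold Rmin, Rmax in Hφ; destruct (Rle_dec 0 θ); unfold Rabs; destruct (Rcase_abs θ), (Rcase_abs φ); lra.
Qed.

Section Rotation.
Variables (s : C) (ρ : R).

(* [(x e^{iφ})^s e^{-ρ x e^{iφ}} e^{iφ}]: the integrand [t^s e^{-ρ t}] along the ray of angle [φ]. *)
Definition rot_integrand (φ x : R) : C :=
  cexp (Ci * (s + 1) * RtoC φ) * (rpowC x s * cexp (RtoC (- ρ * x) * expi φ)).

Definition rot_log_deriv (φ x : R) : C := Ci * (s + 1) + RtoC (- ρ * x) * (Ci * expi φ).

Definition rot_deriv (φ x : R) : C := rot_log_deriv φ x * rot_integrand φ x.

Definition rot_deriv2 (φ x : R) : C :=
  RtoC (- ρ * x) * (Ci * (Ci * expi φ)) * rot_integrand φ x + rot_log_deriv φ x * rot_deriv φ x.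

Lemma is_derive_rot_integrand φ x : is_derive_C (fun p => rot_integrand p x) φ (rot_deriv φ x).
Proof.
  unfold rot_integrand, rot_deriv, rot_log_deriv. eapply is_derive_C_eq.
  - apply is_derive_C_mult.
    + apply is_derive_C_cexp, is_derive_C_scal, is_derive_C_id.
    + apply is_derive_C_scal, is_derive_C_cexp, is_derive_C_scal, is_derive_C_expi.
  - cbv beta. unfold rot_integrand. ring.
Qed.

Lemma is_derive_rot_deriv φ x : is_derive_C (fun p => rot_deriv p x) φ (rot_deriv2 φ x).
Proof.
  unfold rot_deriv, rot_deriv2. eapply is_derive_C_eq.
  - apply is_derive_C_mult; [| apply is_derive_rot_integrand].
    unfold rot_log_deriv. apply is_derive_C_plus. apply is_derive_C_const.
    apply is_derive_C_scal, is_derive_C_scal, is_derive_C_expi.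
  - cbv beta. unfold rot_deriv. ring.
Qed.

(* The angular derivative of the integrand is the radial derivative of [i x h]. *)
Lemma is_derive_rot_integrand_radial φ x : 0 < x ->
  is_derive_C (fun y => Ci * (RtoC y * rot_integrand φ y)) x (rot_deriv φ x).
Proof.
  intros Hx. unfold rot_integrand. eapply is_derive_C_eq.
  - apply is_derive_C_scal, is_derive_C_mult. apply is_derive_C_id.
    apply is_derive_C_scal, is_derive_C_mult. apply is_derive_C_rpowC; auto.
    apply is_derive_C_cexp, is_derive_C_mult; [| apply is_derive_C_const].
    apply is_derive_C_RtoC, is_derive_scal, is_derive_id.
  - unfold rot_deriv, rot_log_deriv, rot_integrand.
    assert (RtoC x <> 0) by (intros E; apply (f_equal fst) in E; simpl in E; lra).
    rewrite RtoC_inv by lra. change one with 1%R.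
    replace (RtoC (- ρ * x)) with (RtoC (- ρ) * RtoC x) by (rewrite <- RtoC_mult; f_equal).
    replace (RtoC (- ρ * 1)) with (RtoC (- ρ)) by (f_equal; ring).
    field. auto.
Qed.

Lemma is_derive_C_rot_integrand_x φ x : 0 < x -> exists l, is_derive_C (rot_integrand φ) x l.
Proof.
  intros Hx. eexists. eapply is_derive_C_mult. apply is_derive_C_const.
  apply is_derive_C_mult. apply is_derive_C_rpowC; auto.
  apply is_derive_C_cexp, is_derive_C_mult; [| apply is_derive_C_const].
  apply is_derive_C_RtoC, is_derive_scal, is_derive_id.
Qed.

Lemma continuous_rot_integrand φ x : 0 < x -> continuous_C (rot_integrand φ) x.
Proof. intros Hx. destruct (is_derive_C_rot_integrand_x φ x Hx) as [l Hl]. exact (is_derive_C_continuous _ _ _ Hl). Qed.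

Lemma continuous_rot_deriv φ x : 0 < x -> continuous_C (rot_deriv φ) x.
Proof.
  intros Hx. destruct (is_derive_C_rot_integrand_x φ x Hx) as [l Hl].
  eapply is_derive_C_continuous. apply is_derive_C_mult; [| exact Hl].
  unfold rot_log_deriv. apply is_derive_C_plus. apply is_derive_C_const.
  apply is_derive_C_mult; [| apply is_derive_C_const].
  apply is_derive_C_RtoC, is_derive_scal, is_derive_id.
Qed.

Lemma Cmod_rot_integrand φ x : 0 < x ->
  Cmod (rot_integrand φ x) = (exp (- snd s * φ) * exp (fst s * ln x) * exp (- ρ * x * cos φ))%R.
Proof.
  intros Hx. unfold rot_integrand. rewrite !Cmod_mult, Cmod_rpowC, !Cmod_cexp, expi_eq by auto.
  rewrite Rmult_assoc. destruct s as [s1 s2]. f_equal.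
  - f_equal. simpl. ring.
  - f_equal. f_equal. simpl. ring.
Qed.

Hypothesis Hρ : 0 < ρ.

Lemma Cmod_rot_log_deriv_le φ x L : 0 < x <= L -> Cmod (rot_log_deriv φ x) <= Cmod (s + 1) + ρ * L.
Proof.
  intros Hx. unfold rot_log_deriv. eapply Rle_trans. apply Cmod_triangle.
  rewrite !Cmod_mult, Cmod_Ci, Cmod_expi, Cmod_R, Rabs_left1 by nra. nra.
Qed.

Lemma Cmod_rot_integrand_le_cos φ θ x : 0 < x -> Rabs φ <= Rabs θ -> cos θ <= cos φ ->
  Cmod (rot_integrand φ x) <= exp (Rabs (snd s) * Rabs θ) * exp (fst s * ln x - ρ * x * cos θ).
Proof.
  intros Hx Hφθ Hc. rewrite Cmod_rot_integrand, Rmult_assoc, <- exp_plus by lra.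
  pose proof (Rabs_pos (snd s)). pose proof (Rle_abs (- snd s * φ)) as Habs.
  rewrite Rabs_mult, Rabs_Ropp in Habs.
  apply Rmult_le_compat; try (left; apply exp_pos); apply exp_le; [nra |].
  assert (0 < ρ * x) by nra. nra.
Qed.

Hypothesis Hs : 1 <= fst s.

Lemma Cmod_rot_integrand_le φ x c L : Rabs φ <= c -> 0 < x <= L ->
  Cmod (rot_integrand φ x) <= exp (Rabs (snd s) * c) * exp (fst s * ln L) * exp (ρ * L).
Proof.
  intros Hφ Hx. rewrite Cmod_rot_integrand by lra.
  pose proof (Rabs_pos (snd s)). pose proof (COS_bound φ).
  pose proof (Rle_abs (- snd s * φ)) as Habs. rewrite Rabs_mult, Rabs_Ropp in Habs.
  assert (0 < ρ * x) by nra.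
  apply Rmult_le_compat; [| left; apply exp_pos | | apply exp_le; nra].
  - apply Rmult_le_pos; left; apply exp_pos.
  - apply Rmult_le_compat; try (left; apply exp_pos); apply exp_le; [nra |].
    apply Rmult_le_compat_l; [lra | apply ln_le; lra].
Qed.

Lemma Cmod_rot_deriv2_le φ x c L : Rabs φ <= c -> 0 < x <= L ->
  Cmod (rot_deriv2 φ x)
  <= (ρ * L + (Cmod (s + 1) + ρ * L) ^ 2) * (exp (Rabs (snd s) * c) * exp (fst s * ln L) * exp (ρ * L)).
Proof.
  intros Hφ Hx.
  pose proof (Cmod_rot_integrand_le φ x c L Hφ Hx) as Hh.
  pose proof (Cmod_rot_log_deriv_le φ x L Hx) as Hq.
  pose proof (Cmod_ge_0 (rot_integrand φ x)). pose proof (Cmod_ge_0 (rot_log_deriv φ x)).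
  unfold rot_deriv2, rot_deriv. eapply Rle_trans. apply Cmod_triangle.
  rewrite !Cmod_mult, !Cmod_Ci, Cmod_expi, Cmod_R, Rabs_left1 by nra.
  assert (Cmod (rot_log_deriv φ x) * Cmod (rot_log_deriv φ x) <= (Cmod (s + 1) + ρ * L) ^ 2) by nra.
  rewrite Rmult_plus_distr_r. apply Rplus_le_compat.
  - replace (- (- ρ * x) * (1 * (1 * 1)))%R with (ρ * x)%R by ring. apply Rmult_le_compat; nra.
  - rewrite <- Rmult_assoc. apply Rmult_le_compat; nra.
Qed.

Variables ε L : R.
Hypothesis Hε : 0 < ε.
Hypothesis HεL : ε < L.

Definition Phi (φ : R) : C := CInt (rot_integrand φ) ε L.

Definition Phi_deriv (φ : R) : C := Ci * (RtoC L * rot_integrand φ L) - Ci * (RtoC ε * rot_integrand φ ε).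

Lemma ex_RInt_rot_integrand φ : ex_CInt (rot_integrand φ) ε L.
Proof.
  apply ex_RInt_continuous. intros z [Hz _]. apply continuous_rot_integrand.
  eapply Rlt_le_trans; [apply Rmin_glb_lt | exact Hz]; lra.
Qed.

Lemma CInt_rot_deriv φ : CInt (rot_deriv φ) ε L = Phi_deriv φ.
Proof.
  unfold CInt. apply (is_RInt_unique (V:=C_R_CompleteNormedModule)).
  apply (is_RInt_derive (V:=C_R_CompleteNormedModule) (fun y => Ci * (RtoC y * rot_integrand φ y)));
    intros x [Hx _]; assert (0 < x) by (eapply Rlt_le_trans; [apply Rmin_glb_lt | exact Hx]; lra).
  - apply is_derive_rot_integrand_radial; auto.
  - apply continuous_rot_deriv; auto.
Qed.

Lemma is_derive_Phi φ0 : is_derive_C Phi φ0 (Phi_deriv φ0).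
Proof.
  rewrite <- CInt_rot_deriv. unfold Phi.
  apply (is_derive_CInt_param rot_integrand rot_deriv rot_deriv2 ε L φ0
    ((ρ * L + (Cmod (s + 1) + ρ * L) ^ 2) * (exp (Rabs (snd s) * (Rabs φ0 + 1)) * exp (fst s * ln L) * exp (ρ * L)))).
  - lra.
  - intros; apply is_derive_rot_integrand.
  - intros; apply is_derive_rot_deriv.
  - intros φ x Hφ Hx. apply Cmod_rot_deriv2_le; [| lra].
    pose proof (Rabs_triang_inv φ φ0). lra.
  - intros; apply ex_RInt_rot_integrand.
  - apply ex_RInt_continuous. intros z [Hz _]. apply continuous_rot_deriv.
    eapply Rlt_le_trans; [apply Rmin_glb_lt | exact Hz]; lra.
Qed.

Lemma Cmod_Phi_deriv_le θ φ : ε <= 1 -> - PI / 2 < θ < PI / 2 -> Rmin 0 θ <= φ <= Rmax 0 θ ->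
  Cmod (Phi_deriv φ) <= exp (Rabs (snd s) * Rabs θ) * (L * exp (fst s * ln L - ρ * L * cos θ) + ε).
Proof.
  intros Hε1 Hθ Hφ.
  pose proof (cos_le_between θ φ Hθ Hφ) as Hc.
  assert (Hφθ : Rabs φ <= Rabs θ).
  { unfold Rmin, Rmax in Hφ. destruct (Rle_dec 0 θ); unfold Rabs; destruct (Rcase_abs φ), (Rcase_abs θ); lra. }
  assert (Hcos : 0 < cos θ) by (apply cos_gt_0; lra).
  pose proof (Cmod_rot_integrand_le_cos φ θ L ltac:(lra) Hφθ Hc) as HL.
  pose proof (Cmod_rot_integrand_le_cos φ θ ε Hε Hφθ Hc) as He.
  assert (Hsmall : exp (fst s * ln ε - ρ * ε * cos θ) <= 1).
  { rewrite <- exp_0. apply exp_le. pose proof (ln_nonpos ε ltac:(lra)). assert (0 < ρ * ε) by nra. nra. }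
  pose proof (exp_pos (Rabs (snd s) * Rabs θ)).
  unfold Phi_deriv. eapply Rle_trans. apply Cmod_triangle.
  rewrite Cmod_opp, !Cmod_mult, !Cmod_Ci, !Cmod_R, !Rabs_right by lra.
  rewrite Rmult_plus_distr_l. apply Rplus_le_compat.
  - replace (exp (Rabs (snd s) * Rabs θ) * (L * exp (fst s * ln L - ρ * L * cos θ)))%R
      with (1 * (L * (exp (Rabs (snd s) * Rabs θ) * exp (fst s * ln L - ρ * L * cos θ))))%R by ring.
    apply Rmult_le_compat_l; [lra |]. apply Rmult_le_compat_l; [lra | exact HL].
  - rewrite Rmult_1_l, Rmult_comm. apply Rmult_le_compat_r; [lra |].
    eapply Rle_trans; [exact He |]. rewrite <- (Rmult_1_r (exp _)) at 2.
    apply Rmult_le_compat_l; lra.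
Qed.

Lemma Cmod_Phi_sub_le θ : ε <= 1 -> - PI / 2 < θ < PI / 2 ->
  Cmod (Phi θ - Phi 0)
  <= 2 * (exp (Rabs (snd s) * Rabs θ) * (L * exp (fst s * ln L - ρ * L * cos θ) + ε)) * Rabs θ.
Proof.
  intros Hε1 Hθ. rewrite <- (Rminus_0_r θ) at 4.
  apply (mean_value_ineq_C Phi Phi_deriv).
  - intros; apply is_derive_Phi.
  - intros φ Hφ. apply Cmod_Phi_deriv_le; auto.
Qed.

Lemma Phi_eq θ :
  Phi θ = cexp (Ci * (s + 1) * RtoC θ) * CInt (laplace_integrand s (RtoC ρ * expi θ)) ε L.
Proof.
  unfold Phi. apply CInt_Cmult_l.
  - apply ex_RInt_laplace_integrand; lra.
  - intros x _. unfold laplace_integrand. unfold rot_integrand. do 3 f_equal.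
    replace (RtoC (- ρ * x)) with (- RtoC ρ * RtoC x) by (apply injective_projections; simpl; ring). ring.
Qed.

Lemma Phi_0_scaled : cexp ((s + 1) * RtoC (ln ρ)) * Phi 0 = CInt (Gamma_integrand s) (ρ * ε) (ρ * L).
Proof.
  pose proof (RInt_comp_lin (V:=C_R_CompleteNormedModule) (Gamma_integrand s) ρ 0 ε L) as H.
  rewrite !Rplus_0_r in H. unfold CInt. rewrite <- H by (apply ex_RInt_Gamma_integrand; nra).
  symmetry. apply (CInt_Cmult_l (cexp ((s + 1) * RtoC (ln ρ))) (rot_integrand 0)).
  - apply ex_RInt_rot_integrand.
  - intros y [Hy _]. assert (Hy0 : 0 < y) by (eapply Rle_lt_trans; [apply Rmin_glb | exact Hy]; lra).
    rewrite scal_C. unfold Gamma_integrand, rot_integrand. rewrite Rplus_0_r.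
    rewrite !rpowC_pos, ln_mult by nra.
    replace (Ci * (s + 1) * RtoC 0) with (RtoC 0) by ring. rewrite cexp_0, expi_0.
    replace (RtoC ρ) with (cexp (RtoC (ln ρ))) by (rewrite cexp_RtoC, exp_ln; auto).
    rewrite <- cexp_RtoC, Cmult_1_l, <- !cexp_add. f_equal.
    repeat rewrite ?RtoC_plus, ?RtoC_opp, ?RtoC_mult. ring.
Qed.

Lemma laplace_split θ :
  cexp (- s * (RtoC (ln ρ) + Ci * RtoC θ)) * CGamma (s + 1)
    - RtoC ρ * expi θ * CInt (laplace_integrand s (RtoC ρ * expi θ)) 0 L
  = cexp (- s * (RtoC (ln ρ) + Ci * RtoC θ)) * (CGamma (s + 1) - CInt (Gamma_integrand s) (ρ * ε) (ρ * L))
    + cexp (RtoC (ln ρ) - Ci * s * RtoC θ) * (Phi 0 - Phi θ)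
    - RtoC ρ * expi θ * CInt (laplace_integrand s (RtoC ρ * expi θ)) 0 ε.
Proof.
  set (P := cexp (- s * (RtoC (ln ρ) + Ci * RtoC θ))).
  set (Q := cexp (RtoC (ln ρ) - Ci * s * RtoC θ)).
  set (a := RtoC ρ * expi θ).
  set (X := Ci * (s + 1) * RtoC θ).
  set (J := CInt (laplace_integrand s a) ε L).
  assert (HP : P * cexp ((s + 1) * RtoC (ln ρ)) = Q) by (unfold P, Q; rewrite <- cexp_add; f_equal; ring).
  assert (Ha : a * cexp (- X) = Q) by (unfold a, Q, X; rewrite polar_cexp, <- cexp_add by lra; f_equal; ring).
  assert (E1 : Q * Phi 0 = P * (cexp ((s + 1) * RtoC (ln ρ)) * Phi 0)) by (rewrite <- HP; ring).
  assert (E2 : Q * (cexp X * J) = a * J).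
  { rewrite <- Ha. transitivity (a * (cexp (- X) * cexp X) * J); [ring |]. rewrite cexp_opp_mul. ring. }
  rewrite (CInt_Chasles _ 0 ε L) by (apply ex_RInt_laplace_integrand; lra).
  rewrite <- Phi_0_scaled, (Phi_eq θ). fold a X J.
  replace (Q * (Phi 0 - cexp X * J)) with (Q * Phi 0 - Q * (cexp X * J)) by ring.
  rewrite E1, E2. ring.
Qed.

Lemma Cmod_Phi_sub_le_uniform θ τ : ε <= 1 -> - PI / 2 < θ < PI / 2 -> ε <= τ ->
  L * exp (fst s * ln L - ρ * L * cos θ) <= τ ->
  Cmod (Phi θ - Phi 0) <= 8 * exp (Rabs (snd s) * 2) * τ.
Proof.
  intros Hε1 Hθ Hετ HLτ.
  assert (Hθ2 : Rabs θ <= 2) by (pose proof PI_4; unfold Rabs; destruct (Rcase_abs θ); lra).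
  assert (Hx : exp (Rabs (snd s) * Rabs θ) <= exp (Rabs (snd s) * 2))
    by (apply exp_le, Rmult_le_compat_l; [apply Rabs_pos | lra]).
  pose proof (exp_pos (Rabs (snd s) * Rabs θ)). pose proof (Rabs_pos θ).
  assert (0 <= L * exp (fst s * ln L - ρ * L * cos θ)) by (apply Rmult_le_pos; [lra | left; apply exp_pos]).
  eapply Rle_trans; [apply Cmod_Phi_sub_le; auto |].
  apply Rle_trans with (2 * (exp (Rabs (snd s) * 2) * (2 * τ)) * 2)%R; [| lra].
  apply Rmult_le_compat; try lra.
  - apply Rmult_le_pos; [lra | apply Rmult_le_pos; lra].
  - apply Rmult_le_compat_l; [lra |]. apply Rmult_le_compat; lra.
Qed.

End Rotation.

Lemma CGamma_truncation_approx s η : 1 <= fst s -> 0 < η ->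
  exists δ M, 0 < δ /\ forall a b, 0 < a < δ -> M < b ->
    Cmod (CGamma (s + 1) - CInt (Gamma_integrand s) a b) <= η.
Proof.
  intros Hs Hη.
  assert (Hη2 : 0 < η / 2) by lra.
  destruct (is_RInt_gen_CGamma s Hs (ball (CGamma (s + 1)) (η / 2))) as [Pa Pb [δ Hδ] [M HM] HPab].
  { exists (mkposreal _ Hη2). auto. }
  exists δ, M. split; [apply cond_pos |]. intros a b Ha Hb.
  destruct (HPab a b) as [y [Hy1 Hy2]].
  { apply Hδ; [| lra]. change (Rabs (a - 0) < δ). rewrite Rminus_0_r, Rabs_right; lra. }
  { apply HM. exact Hb. }
  replace (CInt (Gamma_integrand s) a b) with y
    by (symmetry; apply (is_RInt_unique (V:=C_R_CompleteNormedModule)); exact Hy1).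
  replace η with (2 * (η / 2))%R by field. apply Cmod_le_of_ball_C. exact Hy2.
Qed.

Lemma CGamma_truncation_approx_scaled s ρ η : 1 <= fst s -> 0 < ρ -> 0 < η ->
  exists ε0 L0, 0 < ε0 /\ forall ε L, 0 < ε <= ε0 -> L0 <= L ->
    Cmod (CGamma (s + 1) - CInt (Gamma_integrand s) (ρ * ε) (ρ * L)) <= η.
Proof.
  intros Hs Hρ Hη. destruct (CGamma_truncation_approx s η Hs Hη) as [δ [M [Hδ HG]]].
  exists (δ / (2 * ρ))%R, ((Rabs M + 1) / ρ)%R. split; [apply Rdiv_lt_0_compat; lra |].
  intros ε L Hε HL. apply HG.
  - split; [nra |]. apply Rle_lt_trans with (ρ * (δ / (2 * ρ)))%R; [apply Rmult_le_compat_l; lra |].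
    replace (ρ * (δ / (2 * ρ)))%R with (δ / 2)%R by (field; lra). lra.
  - apply Rmult_le_compat_l with (r := ρ) in HL; [| lra].
    replace (ρ * ((Rabs M + 1) / ρ))%R with (Rabs M + 1)%R in HL by (field; lra).
    pose proof (Rle_abs M). lra.
Qed.

Lemma mul_exp_eventually_le σ c τ : 0 <= σ -> 0 < c -> 0 < τ ->
  exists L0, forall L, L0 <= L -> L * exp (σ * ln L - c * L) <= τ.
Proof.
  intros Hσ Hc Hτ.
  set (C3 := ((σ + 1) * (ln (2 * (σ + 1)) - 1) - (σ + 1) * ln c)%R).
  exists (Rmax 1 (2 * Rabs (C3 - ln τ) / c)). intros L HL.
  assert (HL1 : 1 <= L) by (eapply Rle_trans; [apply Rmax_l | exact HL]).
  assert (HL2 : 2 * Rabs (C3 - ln τ) <= c * L).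
  { apply Rmult_le_reg_r with (/ c)%R. apply Rinv_0_lt_compat; lra.
    replace (c * L * / c)%R with L by (field; lra). eapply Rle_trans; [apply Rmax_r | exact HL]. }
  rewrite <- (exp_ln L) at 1 by lra. rewrite <- (exp_ln τ) by lra. rewrite <- exp_plus. apply exp_le.
  pose proof (ln_le_linear (σ + 1) (c * L) ltac:(lra) ltac:(nra)) as Hlin.
  rewrite ln_mult in Hlin by lra.
  pose proof (Rle_abs (C3 - ln τ)). unfold C3 in *. nra.
Qed.

Lemma Cmod_laplace_error_le s ρ θ ε L τ : 1 <= fst s -> 0 < ρ -> - PI / 2 < θ < PI / 2 ->
  0 < ε <= 1 / 2 -> 1 <= L -> ε <= τ -> L * exp (fst s * ln L - ρ * L * cos θ) <= τ ->
  Cmod (cexp (- s * (RtoC (ln ρ) + Ci * RtoC θ)) * CGamma (s + 1)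
        - RtoC ρ * expi θ * CInt (laplace_integrand s (RtoC ρ * expi θ)) 0 L)
  <= Cmod (cexp (- s * (RtoC (ln ρ) + Ci * RtoC θ)))
       * Cmod (CGamma (s + 1) - CInt (Gamma_integrand s) (ρ * ε) (ρ * L))
     + Cmod (cexp (RtoC (ln ρ) - Ci * s * RtoC θ)) * (8 * exp (Rabs (snd s) * 2) * τ)
     + Cmod (RtoC ρ * expi θ) * ε.
Proof.
  intros Hs Hρ Hθ Hε HL Hετ HLτ.
  rewrite (laplace_split s ρ Hρ Hs ε L ltac:(lra) ltac:(lra) θ).
  set (a := RtoC ρ * expi θ).
  eapply Rle_trans. apply Cmod_triangle. rewrite Cmod_opp.
  eapply Rle_trans. apply Rplus_le_compat_r, Cmod_triangle.
  rewrite !Cmod_mult. apply Rplus_le_compat; [apply Rplus_le_compat; [lra |] |].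
  - apply Rmult_le_compat_l; [apply Cmod_ge_0 |].
    replace (Phi s ρ ε L 0 - Phi s ρ ε L θ) with (- (Phi s ρ ε L θ - Phi s ρ ε L 0)) by ring.
    rewrite Cmod_opp. apply (Cmod_Phi_sub_le_uniform s ρ Hρ Hs); lra.
  - apply Rmult_le_compat_l; [apply Cmod_ge_0 |].
    replace ε with ((ε - 0) * 1)%R at 2 by ring.
    apply Cmod_CInt_le_const; [lra | apply ex_RInt_laplace_integrand; lra |].
    intros x Hx. apply (Cmod_laplace_integrand_le_1 s _ Hs); [| lra].
    unfold a. rewrite expi_eq. simpl. assert (0 < cos θ) by (apply cos_gt_0; lra). nra.
Qed.

Theorem laplace_polar_approx s ρ θ η : 1 <= fst s -> 0 < ρ -> - PI / 2 < θ < PI / 2 -> 0 < η ->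
  exists L0, forall L, L0 <= L ->
    Cmod (cexp (- s * (RtoC (ln ρ) + Ci * RtoC θ)) * CGamma (s + 1)
          - RtoC ρ * expi θ * CInt (laplace_integrand s (RtoC ρ * expi θ)) 0 L) <= η.
Proof.
  intros Hs Hρ Hθ Hη.
  set (cP := Cmod (cexp (- s * (RtoC (ln ρ) + Ci * RtoC θ)))).
  set (cQ := (Cmod (cexp (RtoC (ln ρ) - Ci * s * RtoC θ)) * (8 * exp (Rabs (snd s) * 2)))%R).
  set (ca := Cmod (RtoC ρ * expi θ)).
  assert (Hc : 0 <= cP /\ 0 <= cQ /\ 0 <= ca).
  { pose proof (exp_pos (Rabs (snd s) * 2)). pose proof (Cmod_ge_0 (cexp (RtoC (ln ρ) - Ci * s * RtoC θ))).
    repeat split; try apply Cmod_ge_0. unfold cQ. nra. }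
  set (τ := (η / (cP + cQ + ca + 1))%R).
  assert (Hτ : 0 < τ) by (apply Rdiv_lt_0_compat; lra).
  destruct (CGamma_truncation_approx_scaled s ρ τ Hs Hρ Hτ) as [ε0 [L2 [Hε0 HG]]].
  assert (Hcos : 0 < cos θ) by (apply cos_gt_0; lra).
  destruct (mul_exp_eventually_le (fst s) (ρ * cos θ) τ ltac:(lra) ltac:(nra) Hτ) as [L1 HL1].
  set (ε := Rmin (Rmin (1 / 2) ε0) τ).
  assert (Hε : 0 < ε) by (repeat apply Rmin_pos; lra).
  assert (Hε1 : ε <= 1 / 2) by (eapply Rle_trans; apply Rmin_l).
  assert (Hε2 : ε <= ε0) by (eapply Rle_trans; [apply Rmin_l | apply Rmin_r]).
  assert (Hε3 : ε <= τ) by apply Rmin_r.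
  exists (Rmax 1 (Rmax L2 L1)). intros L HL.
  assert (HL1' : 1 <= L) by (eapply Rle_trans; [apply Rmax_l | exact HL]).
  assert (HL2 : L2 <= L) by (eapply Rle_trans; [eapply Rle_trans; [apply Rmax_l | apply Rmax_r] | exact HL]).
  assert (HL3 : L1 <= L) by (eapply Rle_trans; [eapply Rle_trans; [apply Rmax_r | apply Rmax_r] | exact HL]).
  assert (HLτ : L * exp (fst s * ln L - ρ * L * cos θ) <= τ).
  { replace (ρ * L * cos θ)%R with (ρ * cos θ * L)%R by ring. apply HL1, HL3. }
  pose proof (HG ε L (conj Hε Hε2) HL2) as HΓ.
  eapply Rle_trans; [apply (Cmod_laplace_error_le s ρ θ ε L τ); auto; lra |].
  fold cP ca.
  replace (Cmod (cexp (RtoC (ln ρ) - Ci * s * RtoC θ)) * (8 * exp (Rabs (snd s) * 2) * τ))%R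
    with (cQ * τ)%R by (unfold cQ; ring).
  assert (Hητ : ((cP + cQ + ca + 1) * τ = η)%R) by (unfold τ; field; lra).
  pose proof (Rmult_le_compat_l cP _ _ (proj1 Hc) HΓ). pose proof (Rmult_le_compat_l ca _ _ (proj2 (proj2 Hc)) Hε3).
  nra.
Qed.

(** * The asymptotics of [T_n] *)

Section PolarForm.
Variable w : C.
Hypothesis Hw : 0 < fst w.

Lemma Carg_re_pos : Carg w = atan (snd w / fst w).
Proof. unfold Carg, Re, Im. destruct (Rlt_dec 0 (fst w)); [reflexivity | lra]. Qed.

Lemma Carg_bound_re_pos : - PI / 2 < Carg w < PI / 2.
Proof. rewrite Carg_re_pos. apply atan_bound. Qed.

Lemma Cmod_re_pos : Cmod w = (fst w * sqrt (1 + Rsqr (snd w / fst w)))%R.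
Proof.
  destruct w as [x y]. simpl in *. unfold Cmod. simpl.
  replace (x * (x * 1) + y * (y * 1))%R with (Rsqr x * (1 + Rsqr (y / x)))%R by (unfold Rsqr; field; lra).
  rewrite sqrt_mult_alt by apply Rle_0_sqr. rewrite sqrt_Rsqr by lra. reflexivity.
Qed.

Lemma Cmod_pos_re_pos : 0 < Cmod w.
Proof. pose proof (Rabs_fst_le_Cmod w). pose proof (Rle_abs (fst w)). lra. Qed.

Lemma polar_form : RtoC (Cmod w) * expi (Carg w) = w.
Proof.
  rewrite expi_eq, Carg_re_pos, cos_atan, sin_atan, Cmod_re_pos.
  assert (0 < sqrt (1 + Rsqr (snd w / fst w))).
  { apply sqrt_lt_R0. pose proof (Rle_0_sqr (snd w / fst w)). lra. }
  destruct w as [x y]. simpl in *. apply injective_projections; simpl; field; lra.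
Qed.

Lemma Clog_polar : Clog w = RtoC (ln (Cmod w)) + Ci * RtoC (Carg w).
Proof. unfold Clog. apply injective_projections; simpl; ring. Qed.

End PolarForm.

Lemma exp_2_ge_4 : 4 <= exp 2.
Proof. replace 2%R with (1 + 1)%R by ring. rewrite exp_plus. pose proof (exp_ineq1_le 1). nra. Qed.

Section RightHalfPlane.
Variables (n : R) (w v : C).
Hypothesis Hw : 1 <= fst w.
Hypothesis Hn : 16 * (Rabs (fst v) + 1) <= n.

Lemma n_ge_1 : 1 <= n.
Proof. pose proof (Rabs_pos (fst v)). lra. Qed.

Lemma re_n_add_v_ge_1 : 1 <= fst (RtoC n + v).
Proof. simpl. pose proof (Rle_abs (- fst v)). rewrite Rabs_Ropp in H. pose proof n_ge_1. lra. Qed.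

(* [n^{-(n+v)} w^{-(n+v)} = (n w)^{-(n+v)}] for the principal branch, since [Re w > 0]. *)
Lemma power_polar :
  cexp (- (RtoC n + v) * RtoC (ln n)) * cexp (- (RtoC n + v) * Clog w)
  = cexp (- (RtoC n + v) * (RtoC (ln (n * Cmod w)) + Ci * RtoC (Carg w))).
Proof.
  pose proof n_ge_1. rewrite <- cexp_add, Clog_polar, ln_mult by (try apply Cmod_pos_re_pos; lra).
  f_equal. rewrite RtoC_plus. ring.
Qed.

Lemma n_mul_polar : RtoC (n * Cmod w) * expi (Carg w) = RtoC n * w.
Proof. rewrite RtoC_mult, <- Cmult_assoc, polar_form by lra. reflexivity. Qed.

Lemma T_n_sub_CInt_integrand L : exp 2 <= L ->
  T_n n w v - (RtoC n + v) * CInt (integrand n w v) 0 2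
  = cexp (RtoC n * w) * (cexp (- (RtoC n + v) * RtoC (ln n)) * cexp (- (RtoC n + v) * Clog w) * CGamma (RtoC n + v + 1)
                          - RtoC n * w * CInt (laplace_integrand (RtoC n + v) (RtoC n * w)) 0 L)
    + RtoC n * w * CInt (S_integrand n w v) (exp 2) L - cexp (phase n w v 2).
Proof.
  intros HL. pose proof exp_2_ge_4. pose proof re_n_add_v_ge_1 as Hs. simpl in Hs.
  assert (HSL : CInt (S_integrand n w v) 0 L
                = cexp (RtoC n * w) * CInt (laplace_integrand (RtoC n + v) (RtoC n * w)) 0 L).
  { apply CInt_Cmult_l. apply ex_RInt_laplace_integrand; [exact re_n_add_v_ge_1 | lra | lra].
    intros x _. unfold S_integrand, laplace_integrand.
    replace (RtoC n * w * RtoC (1 - x)) with (RtoC n * w + - (RtoC n * w) * RtoC x) by (rewrite RtoC_minus; ring).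
    rewrite cexp_add. ring. }
  rewrite CInt_integrand_subst, exp_0, phase_0, cexp_0.
  unfold T_n. change (S_n n w v) with (1 + RtoC n * w * CInt (S_integrand n w v) 0 1).
  rewrite (CInt_Chasles _ 0 (exp 2) L), (CInt_Chasles _ 0 1 (exp 2)) in HSL
    by (apply ex_RInt_S_integrand; lra).
  transitivity (cexp (RtoC n * w) * cexp (- (RtoC n + v) * RtoC (ln n)) * cexp (- (RtoC n + v) * Clog w)
                  * CGamma (RtoC n + v + 1) - RtoC n * w * (cexp (RtoC n * w)
                  * CInt (laplace_integrand (RtoC n + v) (RtoC n * w)) 0 L)
                + RtoC n * w * CInt (S_integrand n w v) (exp 2) L - cexp (phase n w v 2)).
  - rewrite <- HSL. ring.
  - ring.
Qed.

Lemma Cmod_S_integrand_tail_le t : exp 2 <= t -> Cmod (S_integrand n w v t) <= exp (- (3 / 4) * n) * exp (- 1 * t).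
Proof.
  intros Ht. pose proof exp_2_ge_4. pose proof n_ge_1.
  rewrite Cmod_S_integrand, <- exp_plus by lra. apply exp_le.
  assert (Hlt : ln t <= 1 + t / 4).
  { assert (E : ln t = (ln (t / exp 2) + 2)%R) by (rewrite ln_div, ln_exp by (try lra; apply exp_pos); ring).
    pose proof (ln_le_sub_1 (t / exp 2) ltac:(apply Rdiv_lt_0_compat; [lra | apply exp_pos])).
    assert (t / exp 2 <= t / 4) by (apply Rmult_le_compat_l; [lra | apply Rinv_le_contravar; lra]).
    lra. }
  assert (Hl0 : 0 <= ln t) by (rewrite <- ln_1; apply ln_le; lra).
  assert (Hlt2 : ln t <= t) by (pose proof (ln_le_sub_1 t ltac:(lra)); lra).
  pose proof (Rle_abs (fst v)). pose proof (Rabs_pos (fst v)).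
  assert (0 <= n * (fst w - 1)) by nra.
  assert (n * fst w * (1 - t) <= n * (1 - t)) by nra.
  assert (fst v * ln t <= Rabs (fst v) * t).
  { destruct (Rle_lt_dec 0 (fst v)); [rewrite Rabs_right | rewrite Rabs_left]; nra. }
  assert (n * ln t <= n * (1 + t / 4)) by nra.
  assert ((1 + Rabs (fst v)) * t <= n / 16 * t) by nra.
  nra.
Qed.

Lemma Cmod_cexp_phase_2_le : Cmod (cexp (phase n w v 2)) <= exp (2 * fst v) * exp (- n / 2).
Proof.
  rewrite Cmod_cexp_phase, <- exp_plus. apply exp_le.
  pose proof exp_2_ge_4. pose proof n_ge_1.
  assert (fst w * (1 - exp 2) <= 1 - exp 2) by nra. nra.
Qed.

Lemma Cmod_tail_le L : exp 2 <= L ->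
  Cmod (RtoC n * w * CInt (S_integrand n w v) (exp 2) L) <= 4 * Cmod w * exp (- n / 2).
Proof.
  intros HL. pose proof n_ge_1. pose proof exp_2_ge_4.
  assert (Hq : Cmod (CInt (S_integrand n w v) (exp 2) L) <= exp (- (3 / 4) * n)).
  { eapply Rle_trans.
    - apply (Cmod_CInt_le_exp_decay _ _ _ (exp (- (3 / 4) * n)) 1); [lra | exact HL | apply ex_RInt_S_integrand; try lra | ].
      + pose proof re_n_add_v_ge_1. simpl in H1. lra.
      + intros t Ht. apply Cmod_S_integrand_tail_le. lra.
    - assert (Hsmall : exp (- (1) * exp 2) <= exp 0) by (apply exp_le; nra).
      rewrite exp_0 in Hsmall. pose proof (exp_pos (- (3 / 4) * n)). unfold Rdiv. rewrite Rinv_1. nra. }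
  pose proof (mul_exp_neg_le (1 / 4) n ltac:(lra)) as Hmul.
  assert (E : exp (- (3 / 4) * n) = (exp (- (1 / 4 * n)) * exp (- n / 2))%R) by (rewrite <- exp_plus; f_equal; field).
  rewrite E in Hq. replace (/ (1 / 4))%R with 4%R in Hmul by field.
  rewrite !Cmod_mult, Cmod_R, Rabs_right by lra.
  pose proof (Cmod_ge_0 w). pose proof (exp_pos (- n / 2)). pose proof (exp_pos (- (1 / 4 * n))).
  pose proof (Cmod_ge_0 (CInt (S_integrand n w v) (exp 2) L)).
  apply Rle_trans with (Cmod w * (n * exp (- (1 / 4 * n))) * exp (- n / 2))%R.
  - replace (Cmod w * (n * exp (- (1 / 4 * n))) * exp (- n / 2))%R
      with (n * Cmod w * (exp (- (1 / 4 * n)) * exp (- n / 2)))%R by ring.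
    apply Rmult_le_compat_l; nra.
  - assert (Cmod w * (n * exp (- (1 / 4 * n))) <= Cmod w * 4) by (apply Rmult_le_compat_l; lra). nra.
Qed.

End RightHalfPlane.

Theorem T_n_asymptotics (w v : C) : 1 <= Re w ->
  exists K N : R, forall n : R, N <= n ->
    Cmod (T_n n w v - (RtoC n + v) * CInt (integrand n w v) 0 2) <= K * exp (- n / 2).
Proof.
  intros Hw. unfold Re in Hw.
  exists (4 * Cmod w + exp (2 * fst v))%R, (16 * (Rabs (fst v) + 1))%R.
  intros n Hn. apply Rle_plus_epsilon. intros η Hη.
  set (ca := (Cmod (cexp (RtoC n * w)) + 1)%R).
  assert (Hca : 0 < ca) by (pose proof (Cmod_ge_0 (cexp (RtoC n * w))); unfold ca; lra).
  pose proof (n_ge_1 n v Hn) as Hn1.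
  destruct (laplace_polar_approx (RtoC n + v) (n * Cmod w) (Carg w) (η / ca) (re_n_add_v_ge_1 n v Hn)
              ltac:(pose proof (Cmod_pos_re_pos w ltac:(lra)); nra) (Carg_bound_re_pos w ltac:(lra))
              ltac:(apply Rdiv_lt_0_compat; lra)) as [L0 HL0].
  set (L := Rmax L0 (exp 2)).
  pose proof (HL0 L (Rmax_l _ _)) as HA.
  rewrite n_mul_polar, <- power_polar in HA by auto.
  rewrite (T_n_sub_CInt_integrand n w v Hn L (Rmax_r _ _)).
  pose proof (Cmod_tail_le n w v Hw Hn L (Rmax_r _ _)) as Htail.
  pose proof (Cmod_cexp_phase_2_le n w v Hw Hn) as Hphase.
  assert (Hmain : Cmod (cexp (RtoC n * w) * (cexp (- (RtoC n + v) * RtoC (ln n))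
                   * cexp (- (RtoC n + v) * Clog w) * CGamma (RtoC n + v + 1)
                   - RtoC n * w * CInt (laplace_integrand (RtoC n + v) (RtoC n * w)) 0 L)) <= η).
  { rewrite Cmod_mult. apply Rle_trans with (ca * (η / ca))%R; [| right; field; lra].
    apply Rmult_le_compat; try apply Cmod_ge_0; [unfold ca; lra | exact HA]. }
  eapply Rle_trans. apply Cmod_triangle. rewrite Cmod_opp.
  eapply Rle_trans. apply Rplus_le_compat_r, Cmod_triangle. lra.
Qed.

Theorem lemma6p1 :
  (forall w v : C, (Re w <= 1)%R ->
     exists K N : R, forall n : R, (N <= n)%R ->
       (Cmod (S_n n w v - (RtoC n + v) * CInt (integrand n w v) (-2) 0)
          <= K * exp (- n / 2))%R)
  /\
  (forall w v : C, (1 <= Re w)%R ->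
     exists K N : R, forall n : R, (N <= n)%R ->
       (Cmod (T_n n w v - (RtoC n + v) * CInt (integrand n w v) 0 2)
          <= K * exp (- n / 2))%R).
Proof.
  split.
  - exact S_n_asymptotics.
  - exact T_n_asymptotics.
Qed.
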